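(* Let $\Sigma$ be a signature and $G=(G,\sigma,\theta):\mathcal F_\Sigma\to\mathcal C$ a cwf morphism (under the standing assumptions below). Let $f$ be a function symbol not declared in $\Sigma$, and $\Gamma_f,U_f$ such that ($U_f$ type $(\Gamma_f)$)$\in\mathcal J(\Sigma)$, so that $\Sigma'=\Sigma\cup\{(\Gamma_f,f,U_f)\}$ is a signature. Then for every $a\in\mathrm{Tm}_{\mathcal C}(G(\Gamma_f),\sigma(\Gamma_f,U_f))$ there is a unique cwf morphism $G'=(G',\sigma',\theta'):\mathcal F_{\Sigma'}\to\mathcal C$ with $G'\circ E=G$ and $\theta'(\Gamma_f,U_f,f(\mathrm{OV}(\Gamma_f)))=a$, where $E:\mathcal F_\Sigma\to\mathcal F_{\Sigma'}$ is the canonical embedding.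
   Context: Standing assumptions: the variable set is $V=\{1,2,3,\ldots\}$ with $\mathsf{fr}(X)=\max(\{1\}\cup\{x+1:x\in X\})$ and $\varphi(X)=\{\mathsf{fr}(X)\}$ for finite $X\subseteq V$; all declarations of signatures are on standard form, written $(\Gamma,S)$ (type) and $(\Gamma,f,U)$ (function). Preelements are terms built from variables and function symbols; a pretype is $S(t_1,\ldots,t_n)$ with $S$ a type symbol and $t_i$ preelements; $\mathrm{V}(E)$ is the set of variables of $E$; $E[\bar a/\bar x]$ is simultaneous substitution. A precontext is $\Gamma=x_1:A_1,\ldots,x_n:A_n$ with $x_k=\mathsf{fr}(\{x_1,\ldots,x_{k-1}\})$ and $\mathrm{V}(A_k)\subseteq\{x_1,\ldots,x_{k-1}\}$; $\mathrm{OV}(\Gamma)=x_1,\ldots,x_n$; $\mathrm{fresh}(\Gamma)=\mathsf{fr}(\{x_1,\ldots,x_n\})$; $E[\bar a/\Gamma]=E[\bar a/x_1,\ldots,x_n]$. A presignature is a set of declarations $(\Gamma,S)$ ($S$ a type symbol) and $(\Gamma,f,U)$ ($f$ a function symbol, $U$ a pretype with $\mathrm{V}(U)\subseteq\mathrm{V}(\Gamma)$), each symbol declared at most once. $\mathcal{J}(\Sigma)$ is the smallest set of judgements (''$\Gamma$ context'', ''$A$ type $(\Gamma)$'', ''$a:A\ (\Gamma)$'') closed under: (R1) $\langle\rangle$ context; (R2) from $\Gamma$ context and $A$ type $(\Gamma)$ infer $\Gamma,\mathrm{fresh}(\Gamma):A$ context; (R3) from $x_1:A_1,\ldots,x_n:A_n$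 context infer $x_i:A_i\ (x_1:A_1,\ldots,x_n:A_n)$; (R4) if $(\Gamma,S)\in\Sigma$ and $\bar a:\Delta\to\Gamma$ infer $S(\bar a)$ type $(\Delta)$; (R5) if $(\Gamma,f,U)\in\Sigma$, $\bar a:\Delta\to\Gamma$ and $U[\bar a/\Gamma]$ type $(\Delta)$ infer $f(\bar a):U[\bar a/\Gamma]\ (\Delta)$; where, for $\Gamma=x_1:A_1,\ldots,x_n:A_n$, ''$\bar a:\Delta\to\Gamma$'' abbreviates the judgements $\Delta$ context, $\Gamma$ context, $a_k:A_k[a_1,\ldots,a_{k-1}/x_1,\ldots,x_{k-1}]\ (\Delta)$ ($k=1,\ldots,n$). $\Sigma$ is a signature if ($\Gamma$ context)$\in\mathcal{J}(\Sigma)$ for $(\Gamma,S)\in\Sigma$ and ($U$ type $(\Gamma)$)$\in\mathcal{J}(\Sigma)$ for $(\Gamma,f,U)\in\Sigma$. A category with families (cwf) consists of: a category $\mathcal C$ with a terminal object $\top$; for each object $\Gamma$ a class $\mathrm{Ty}(\Gamma)$, and for $f:\Delta\to\Gamma$ a function $A\mapsto A\{f\}:\mathrm{Ty}(\Gamma)\to\mathrm{Ty}(\Delta)$ with $A\{1\}=A$, $A\{f\circ g\}=A\{f\}\{g\}$; for $A\in\mathrm{Ty}(\Gamma)$ an object $\Gamma.A$ and a morphism $\mathrm{p}(A)=\mathrm{p}_\Gamma(A):\Gamma.A\to\Gamma$; for $A\in\mathrm{Ty}(\Gamma)$ a class $\mathrm{Tm}(\Gamma,A)$ and for $f:\Delta\to\Gamma$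 a function $a\mapsto a\{f\}:\mathrm{Tm}(\Gamma,A)\to\mathrm{Tm}(\Delta,A\{f\})$ with $a\{1\}=a$, $a\{f\circ g\}=a\{f\}\{g\}$; for each $A\in\mathrm{Ty}(\Gamma)$ an element $\mathrm{v}_A\in\mathrm{Tm}(\Gamma.A,A\{\mathrm{p}(A)\})$; for $f:\Delta\to\Gamma$ and $a\in\mathrm{Tm}(\Delta,A\{f\})$ a morphism $\langle f,a\rangle_A:\Delta\to\Gamma.A$ such that $\mathrm{p}(A)\circ\langle f,a\rangle_A=f$, $\mathrm{v}_A\{\langle f,a\rangle_A\}=a$, $\langle\mathrm{p}(A)\circ h,\mathrm{v}_A\{h\}\rangle_A=h$ for every $h:\Delta\to\Gamma.A$, and $\langle f,a\rangle_A\circ g=\langle f\circ g,a\{g\}\rangle_A$. A cwf morphism $(F,\sigma,\theta):\mathcal C\to\mathcal C'$ consists of a functor $F$ with $F(\top)=\top'$; functions $\sigma_\Gamma:\mathrm{Ty}(\Gamma)\to\mathrm{Ty}'(F\Gamma)$ with $\sigma_\Delta(A\{f\})=\sigma_\Gamma(A)\{Ff\}$ for $f:\Delta\to\Gamma$, such that $F(\Gamma.A)=F\Gamma.\sigma_\Gamma(A)$ and $F(\mathrm{p}_\Gamma(A))=\mathrm{p}_{F\Gamma}(\sigma_\Gamma(A))$; and functions $\theta_{\Gamma,A}:\mathrm{Tm}(\Gamma,A)\to\mathrm{Tm}'(F\Gamma,\sigma_\Gamma(A))$ with $\theta_{\Delta,A\{f\}}(a\{f\})=\theta_{\Gamma,A}(a)\{Ff\}$,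 $\theta_{\Gamma.A,A\{\mathrm{p}(A)\}}(\mathrm{v}_A)=\mathrm{v}_{\sigma_\Gamma(A)}$, and $F(\langle f,a\rangle_A)=\langle Ff,\theta_{\Delta,A\{f\}}(a)\rangle_{\sigma_\Gamma(A)}$ for $f:\Delta\to\Gamma$, $a\in\mathrm{Tm}(\Delta,A\{f\})$. The cwf $\mathcal F_\Sigma$: objects are precontexts $\Gamma$ with ($\Gamma$ context)$\in\mathcal{J}(\Sigma)$; morphisms $\Delta\to\Gamma$ are triples $(\Delta,\Gamma,\bar a)$ with $\bar a:\Delta\to\Gamma$ a context map in $\mathcal{J}(\Sigma)$; composition $(\Gamma,\Theta,\bar t)\circ(\Delta,\Gamma,\bar s)=(\Delta,\Theta,(t_1[\bar s/\Gamma],\ldots,t_k[\bar s/\Gamma]))$; identity $(\Gamma,\Gamma,\mathrm{OV}(\Gamma))$; terminal object $\langle\rangle$. $\mathrm{Ty}(\Gamma)=\{(\Gamma,A): (A\text{ type }(\Gamma))\in\mathcal{J}(\Sigma)\}$ with $(\Gamma,A)\{(\Delta,\Gamma,\bar a)\}=(\Delta,A[\bar a/\Gamma])$; $\mathrm{Tm}(\Gamma,(\Gamma,A))=\{((\Gamma,A),a): (a:A\ (\Gamma))\in\mathcal{J}(\Sigma)\}$ with $((\Gamma,A),a)\{(\Delta,\Gamma,\bar a)\}=((\Delta,A[\bar a/\Gamma]),a[\bar a/\Gamma])$; for $\mathrm S=(\Gamma,S)$: $\Gamma.\mathrm S=\langle\Gamma,\mathrm{fresh}(\Gamma):S\rangle$,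 $\mathrm{p}_\Gamma(\mathrm S)=(\Gamma.\mathrm S,\Gamma,\mathrm{OV}(\Gamma))$, $\mathrm{v}_{\mathrm S}=((\Gamma.\mathrm S,S),\mathrm{fresh}(\Gamma))$, $\langle(\Delta,\Gamma,\bar s),((\Delta,S[\bar s/\Gamma]),b)\rangle_{\mathrm S}=(\Delta,\Gamma.\mathrm S,(\bar s,b))$. For a cwf morphism $(F,\sigma,\theta)$ out of $\mathcal F_\Sigma$ write $\sigma(\Gamma,A)$ for $\sigma_\Gamma((\Gamma,A))$ and $\theta(\Gamma,A,a)$ for $\theta_{\Gamma,(\Gamma,A)}(((\Gamma,A),a))$. For signatures $\Sigma\subseteq\Sigma'$, the canonical embedding $E:\mathcal F_\Sigma\to\mathcal F_{\Sigma'}$ is the cwf morphism which is the identity on objects, morphisms, types and terms. *)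

From Stdlib Require Import List Arith.
Import ListNotations.

(* Variables are natural numbers (the paper's V = {1,2,...}; only
   variables >= 1 ever occur in derivable judgements since fr(X) >= 1).
   Type symbols and function symbols are two disjoint supplies, each
   indexed by nat. *)

Definition var := nat.
Definition tsym := nat.
Definition fsym := nat.

Inductive pelem : Type :=
| PVar : var -> pelem
| PApp : fsym -> list pelem -> pelem.

Inductive pty : Type :=
| PTy : tsym -> list pelem -> pty.

(* precontexts x_1:A_1, ..., x_n:A_n, listed with x_1 first *)
Definition ctx := list (var * pty).

Definition fr (X : list var) : var := fold_right (fun x m => Nat.max (S x) m) 1 X.

Definition ovars (G : ctx) : list var := map fst G.
Definition OV (G : ctx) : list pelem := map (fun p => PVar (fst p)) G.
Definition fresh (G : ctx) : var := fr (ovars G).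

Fixpoint vars_el (t : pelem) : list var :=
  match t with
  | PVar x => [x]
  | PApp _ ts => flat_map vars_el ts
  end.
Definition vars_ty (A : pty) : list var :=
  match A with PTy _ ts => flat_map vars_el ts end.

Fixpoint assoc (s : list (var * pelem)) (x : var) : pelem :=
  match s with
  | [] => PVar x
  | (y, t) :: s' => if Nat.eqb x y then t else assoc s' x
  end.

Fixpoint subst_el (s : list (var * pelem)) (t : pelem) : pelem :=
  match t with
  | PVar x => assoc s x
  | PApp f ts => PApp f (map (subst_el s) ts)
  end.

Definition subst_ty (s : list (var * pelem)) (A : pty) : pty :=
  match A with PTy Sy ts => PTy Sy (map (subst_el s) ts) end.

Definition csub (G : ctx) (s : list pelem) : list (var * pelem) :=
  combine (ovars G) s.

Definition dummy_ty : pty := PTy 0 [].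
Definition dummy_el : pelem := PVar 0.

Definition is_precontext (G : ctx) : Prop :=
  forall k, k < length G ->
    fst (nth k G (0, dummy_ty)) = fr (ovars (firstn k G)) /\
    incl (vars_ty (snd (nth k G (0, dummy_ty)))) (ovars (firstn k G)).

Inductive decl : Type :=
| DTy : ctx -> tsym -> decl
| DFun : ctx -> fsym -> pty -> decl.

Definition presig := decl -> Prop.

Definition is_presignature (Sg : presig) : Prop :=
  (forall G Sy, Sg (DTy G Sy) -> is_precontext G) /\
  (forall G f U, Sg (DFun G f U) -> is_precontext G /\ incl (vars_ty U) (ovars G)) /\
  (forall G G' Sy, Sg (DTy G Sy) -> Sg (DTy G' Sy) -> G = G') /\
  (forall G G' f U U', Sg (DFun G f U) -> Sg (DFun G' f U') -> G = G' /\ U = U').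

(* The judgements J(Sigma).  "a-bar : Delta -> Gamma" is unfolded inline
   in rules R4 and R5 (it is only an abbreviation in the paper). *)
Inductive jctx (Sg : presig) : ctx -> Prop :=
| R1 : jctx Sg []
| R2 : forall G A, jctx Sg G -> jty Sg G A -> jctx Sg (G ++ [(fresh G, A)])
with jty (Sg : presig) : ctx -> pty -> Prop :=
| R4 : forall G Sy D (s : list pelem),
    Sg (DTy G Sy) ->
    jctx Sg D -> jctx Sg G -> length s = length G ->
    (forall k, k < length G ->
       jtm Sg D (nth k s dummy_el)
           (subst_ty (combine (firstn k (ovars G)) (firstn k s)) (snd (nth k G (0, dummy_ty))))) ->
    jty Sg D (PTy Sy s)
with jtm (Sg : presig) : ctx -> pelem -> pty -> Prop :=
| R3 : forall G x A, jctx Sg G -> In (x, A) G -> jtm Sg G (PVar x) A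
| R5 : forall G f U D (s : list pelem),
    Sg (DFun G f U) ->
    jctx Sg D -> jctx Sg G -> length s = length G ->
    (forall k, k < length G ->
       jtm Sg D (nth k s dummy_el)
           (subst_ty (combine (firstn k (ovars G)) (firstn k s)) (snd (nth k G (0, dummy_ty))))) ->
    jty Sg D (subst_ty (csub G s) U) ->
    jtm Sg D (PApp f s) (subst_ty (csub G s) U).

Definition cmap (Sg : presig) (D G : ctx) (s : list pelem) : Prop :=
  jctx Sg D /\ jctx Sg G /\ length s = length G /\
  (forall k, k < length G ->
     jtm Sg D (nth k s dummy_el)
         (subst_ty (combine (firstn k (ovars G)) (firstn k s)) (snd (nth k G (0, dummy_ty))))).

Definition is_signature (Sg : presig) : Prop :=
  is_presignature Sg /\
  (forall G Sy, Sg (DTy G Sy) -> jctx Sg G) /\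
  (forall G f U, Sg (DFun G f U) -> jty Sg G U).

Definition sig_add (Sg : presig) (d : decl) : presig := fun d' => Sg d' \/ d' = d.

Lemma jty_ctx (Sg : presig) (G : ctx) (A : pty) : jty Sg G A -> jctx Sg G.
Proof. intros H; inversion H; assumption. Qed.

(* Terms over Gamma are collected in one class
   Tm Gamma, each term carrying its type (tyof); Tm(Gamma, A) is
   {a : Tm Gamma | tyof a = A}.  This is exactly how the paper's term model
   tags terms with their types. *)

Record Cwf : Type := {
  Ob : Type;
  Hom : Ob -> Ob -> Type;
  idm : forall X, Hom X X;
  cmp : forall X Y Z, Hom Y Z -> Hom X Y -> Hom X Z;
  cmp_assoc : forall X Y Z W (f : Hom Z W) (g : Hom Y Z) (h : Hom X Y),
      cmp X Z W f (cmp X Y Z g h) = cmp X Y W (cmp Y Z W f g) h;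
  cmp_idl : forall X Y (f : Hom X Y), cmp X Y Y (idm Y) f = f;
  cmp_idr : forall X Y (f : Hom X Y), cmp X X Y f (idm X) = f;
  top : Ob;
  to_top : forall X, Hom X top;
  to_top_uniq : forall X (f : Hom X top), f = to_top X;
  Ty : Ob -> Type;
  tsub : forall D G, Ty G -> Hom D G -> Ty D;
  tsub_id : forall G (A : Ty G), tsub G G A (idm G) = A;
  tsub_cmp : forall T D G (A : Ty G) (f : Hom D G) (g : Hom T D),
      tsub T G A (cmp T D G f g) = tsub T D (tsub D G A f) g;
  ext : forall G, Ty G -> Ob;
  pr : forall G (A : Ty G), Hom (ext G A) G;
  Tm : Ob -> Type;
  tyof : forall G, Tm G -> Ty G;
  msub : forall D G, Tm G -> Hom D G -> Tm D;
  msub_ty : forall D G (a : Tm G) (f : Hom D G),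
      tyof D (msub D G a f) = tsub D G (tyof G a) f;
  msub_id : forall G (a : Tm G), msub G G a (idm G) = a;
  msub_cmp : forall T D G (a : Tm G) (f : Hom D G) (g : Hom T D),
      msub T G a (cmp T D G f g) = msub T D (msub D G a f) g;
  vv : forall G (A : Ty G), Tm (ext G A);
  vv_ty : forall G (A : Ty G), tyof (ext G A) (vv G A) = tsub (ext G A) G A (pr G A);
  pair : forall D G (A : Ty G) (f : Hom D G) (a : Tm D),
      tyof D a = tsub D G A f -> Hom D (ext G A);
  pair_pr : forall D G (A : Ty G) (f : Hom D G) (a : Tm D) (H : tyof D a = tsub D G A f),
      cmp D (ext G A) G (pr G A) (pair D G A f a H) = f;
  pair_vv : forall D G (A : Ty G) (f : Hom D G) (a : Tm D) (H : tyof D a = tsub D G A f),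
      msub D (ext G A) (vv G A) (pair D G A f a H) = a;
  pair_eta : forall D G (A : Ty G) (h : Hom D (ext G A))
      (H : tyof D (msub D (ext G A) (vv G A) h) = tsub D G A (cmp D (ext G A) G (pr G A) h)),
      pair D G A (cmp D (ext G A) G (pr G A) h) (msub D (ext G A) (vv G A) h) H = h;
  pair_nat : forall T D G (A : Ty G) (f : Hom D G) (a : Tm D) (H : tyof D a = tsub D G A f)
      (g : Hom T D) (H' : tyof T (msub T D a g) = tsub T G A (cmp T D G f g)),
      cmp T D (ext G A) (pair D G A f a H) g = pair T G A (cmp T D G f g) (msub T D a g) H'
}.

Arguments Hom {_} _ _.
Arguments idm {_} _.
Arguments cmp {_ _ _ _} _ _.
Arguments top {_}.
Arguments Ty {_} _.
Arguments tsub {_ _ _} _ _.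
Arguments ext {_} _ _.
Arguments pr {_} _ _.
Arguments Tm {_} _.
Arguments tyof {_ _} _.
Arguments msub {_ _ _} _ _.
Arguments vv {_} _ _.
Arguments pair {_ _ _ _} _ _ _.

Definition castDom {C : Cwf} {X Y Z : Ob C} (e : X = Y) (h : Hom X Z) : Hom Y Z :=
  eq_rect X (fun W => Hom W Z) h Y e.
Definition castCod {C : Cwf} {X Y Y' : Ob C} (e : Y = Y') (h : Hom X Y) : Hom X Y' :=
  eq_rect Y (fun W => Hom X W) h Y' e.
Definition castHom {C : Cwf} {X X' Y Y' : Ob C} (e1 : X = X') (e2 : Y = Y') (h : Hom X Y)
  : Hom X' Y' := castCod e2 (castDom e1 h).
Definition castTy {C : Cwf} {X Y : Ob C} (e : X = Y) (A : Ty X) : Ty Y :=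
  eq_rect X (fun W => Ty W) A Y e.
Definition castTm {C : Cwf} {X Y : Ob C} (e : X = Y) (a : Tm X) : Tm Y :=
  eq_rect X (fun W => Tm W) a Y e.

(* The term model F_Sigma: objects, morphisms, types, terms.
   (Triples (Delta,Gamma,a-bar) are represented by a-bar together with the
   indices Delta, Gamma; (Gamma,A) by A in the fibre over Gamma, etc.) *)

Definition FObj (Sg : presig) : Type := { G : ctx | jctx Sg G }.
Definition FHom (Sg : presig) (D G : FObj Sg) : Type :=
  { s : list pelem | cmap Sg (proj1_sig D) (proj1_sig G) s }.
Definition FTy (Sg : presig) (G : FObj Sg) : Type :=
  { A : pty | jty Sg (proj1_sig G) A }.
Definition FTm (Sg : presig) (G : FObj Sg) (A : FTy Sg G) : Type :=
  { a : pelem | jtm Sg (proj1_sig G) a (proj1_sig A) }.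

(* Each operation of
   F_Sigma (identity, composition, terminal object, substitution,
   comprehension, p, v, pairing) is referred to through its defining
   syntactic description in the paper: the condition is imposed on every
   element of F_Sigma having that syntactic form. *)
Record FsMor (Sg : presig) (C : Cwf) : Type := {
  Fo : FObj Sg -> Ob C;
  Fh : forall D G, FHom Sg D G -> Hom (Fo D) (Fo G);
  Fh_id : forall G (i : FHom Sg G G), proj1_sig i = OV (proj1_sig G) -> Fh G G i = idm (Fo G);
  Fh_cmp : forall D G T (f : FHom Sg G T) (g : FHom Sg D G) (h : FHom Sg D T),
      proj1_sig h = map (subst_el (csub (proj1_sig G) (proj1_sig g))) (proj1_sig f) ->
      Fh D T h = cmp (Fh G T f) (Fh D G g);
  F_top : forall T : FObj Sg, proj1_sig T = [] -> Fo T = top;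
  sg : forall G, FTy Sg G -> Ty (Fo G);
  sg_sub : forall D G (A : FTy Sg G) (f : FHom Sg D G) (B : FTy Sg D),
      proj1_sig B = subst_ty (csub (proj1_sig G) (proj1_sig f)) (proj1_sig A) ->
      sg D B = tsub (sg G A) (Fh D G f);
  F_ext : forall G (A : FTy Sg G) (X : FObj Sg),
      proj1_sig X = proj1_sig G ++ [(fresh (proj1_sig G), proj1_sig A)] ->
      Fo X = ext (Fo G) (sg G A);
  F_pr : forall G (A : FTy Sg G) (X : FObj Sg)
      (e : proj1_sig X = proj1_sig G ++ [(fresh (proj1_sig G), proj1_sig A)])
      (h : FHom Sg X G),
      proj1_sig h = OV (proj1_sig G) ->
      castDom (F_ext G A X e) (Fh X G h) = pr (Fo G) (sg G A);
  th : forall G (A : FTy Sg G), FTm Sg G A -> Tm (Fo G);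
  th_ty : forall G (A : FTy Sg G) (a : FTm Sg G A), tyof (th G A a) = sg G A;
  th_sub : forall D G (A : FTy Sg G) (f : FHom Sg D G) (a : FTm Sg G A)
      (B : FTy Sg D) (b : FTm Sg D B),
      proj1_sig B = subst_ty (csub (proj1_sig G) (proj1_sig f)) (proj1_sig A) ->
      proj1_sig b = subst_el (csub (proj1_sig G) (proj1_sig f)) (proj1_sig a) ->
      th D B b = msub (th G A a) (Fh D G f);
  th_vv : forall G (A : FTy Sg G) (X : FObj Sg)
      (e : proj1_sig X = proj1_sig G ++ [(fresh (proj1_sig G), proj1_sig A)])
      (B : FTy Sg X) (v : FTm Sg X B),
      proj1_sig B = proj1_sig A -> proj1_sig v = PVar (fresh (proj1_sig G)) ->
      castTm (F_ext G A X e) (th X B v) = vv (Fo G) (sg G A);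
  th_pair : forall D G (A : FTy Sg G) (X : FObj Sg)
      (e : proj1_sig X = proj1_sig G ++ [(fresh (proj1_sig G), proj1_sig A)])
      (f : FHom Sg D G) (B : FTy Sg D) (b : FTm Sg D B) (h : FHom Sg D X),
      proj1_sig B = subst_ty (csub (proj1_sig G) (proj1_sig f)) (proj1_sig A) ->
      proj1_sig h = proj1_sig f ++ [proj1_sig b] ->
      forall H : tyof (th D B b) = tsub (sg G A) (Fh D G f),
      castCod (F_ext G A X e) (Fh D X h) = pair (Fh D G f) (th D B b) H
}.

Arguments Fo {_ _} _ _.
Arguments Fh {_ _} _ {_ _} _.
Arguments sg {_ _} _ {_} _.
Arguments th {_ _} _ {_ _} _.

(* G' o E = G, where E : F_Sigma -> F_Sigma' is the canonical embedding
   (identity on objects, morphisms, types and terms).  The object part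
   gives equalities of objects of C, along which the other parts are
   compared. *)

Definition EmbObjEq {Sg Sg' : presig} {C : Cwf} (G : FsMor Sg C) (G' : FsMor Sg' C) : Prop :=
  forall (Gm : ctx) (H : jctx Sg Gm) (H' : jctx Sg' Gm),
    Fo G' (exist _ Gm H') = Fo G (exist _ Gm H).

Definition EmbRest {Sg Sg' : presig} {C : Cwf} (G : FsMor Sg C) (G' : FsMor Sg' C)
  (eo : EmbObjEq G G') : Prop :=
  (forall (D Gm : ctx) (HD : jctx Sg D) (HD' : jctx Sg' D) (HG : jctx Sg Gm) (HG' : jctx Sg' Gm)
          (s : list pelem) (Hs : cmap Sg D Gm s) (Hs' : cmap Sg' D Gm s),
      castHom (eo D HD HD') (eo Gm HG HG')
        (@Fh _ _ G' (exist _ D HD') (exist _ Gm HG') (exist _ s Hs'))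
      = @Fh _ _ G (exist _ D HD) (exist _ Gm HG) (exist _ s Hs)) /\
  (forall (Gm : ctx) (HG : jctx Sg Gm) (HG' : jctx Sg' Gm)
          (A : pty) (HA : jty Sg Gm A) (HA' : jty Sg' Gm A),
      castTy (eo Gm HG HG') (@sg _ _ G' (exist _ Gm HG') (exist _ A HA'))
      = @sg _ _ G (exist _ Gm HG) (exist _ A HA)) /\
  (forall (Gm : ctx) (HG : jctx Sg Gm) (HG' : jctx Sg' Gm)
          (A : pty) (HA : jty Sg Gm A) (HA' : jty Sg' Gm A)
          (a : pelem) (Ha : jtm Sg Gm a A) (Ha' : jtm Sg' Gm a A),
      castTm (eo Gm HG HG')
        (@th _ _ G' (exist _ Gm HG') (exist _ A HA') (exist _ a Ha'))
      = @th _ _ G (exist _ Gm HG) (exist _ A HA) (exist _ a Ha)).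

(* A cwf morphism out of the term model F_Sigma is determined by its values on the
   symbols of Sigma, i.e. on the types S(OV Gamma) and terms f(OV Gamma) of the
   declarations: every derivable judgement is built from these by substitution,
   comprehension and variables, all of which a cwf morphism preserves.  Conversely,
   any assignment of semantic types and terms to the symbols that is well typed
   with respect to the declarations extends to a cwf morphism, obtained by
   interpreting contexts as telescopes of iterated comprehensions and types and
   terms by recursion on syntax.  The extension G' is the interpretation of the
   symbol data of G extended by f |-> a; it is unique because any G' with G' o E = G
   sending f(OV Gamma_f) to a has exactly these symbol data. *)

From Stdlib Require Import List Arith Lia ClassicalEpsilon ProofIrrelevance FunctionalExtensionality.
Import ListNotations.

Scheme jctx_mind := Induction for jctx Sort Prop
with jty_mind := Induction for jty Sort Prop
with jtm_mind := Induction for jtm Sort Prop.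
Combined Scheme jall_mind from jctx_mind, jty_mind, jtm_mind.

Lemma pelem_nested_ind (P : pelem -> Prop) :
  (forall x, P (PVar x)) ->
  (forall g ts, Forall P ts -> P (PApp g ts)) ->
  forall t, P t.
Proof.
  intros HV HA. fix IH 1. intros [x|g ts].
  - apply HV.
  - apply HA. induction ts as [|t ts IHts]; constructor; auto.
Qed.

Lemma fr_cons x xs : fr (x :: xs) = Nat.max (S x) (fr xs).
Proof. reflexivity. Qed.

Lemma fr_gt (xs : list var) y : In y xs -> y < fr xs.
Proof.
  induction xs; intros H; [contradiction|]. rewrite fr_cons. simpl in H.
  destruct H as [<-|H]; [lia|]. specialize (IHxs H). lia.
Qed.

Lemma fr_notin xs : ~ In (fr xs) xs.
Proof. intros H. apply fr_gt in H. lia. Qed.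

Lemma assoc_vars xs y : assoc (combine xs (map PVar xs)) y = PVar y.
Proof.
  induction xs; simpl; auto. destruct (Nat.eqb y a) eqn:E; auto.
  apply Nat.eqb_eq in E; subst; auto.
Qed.

Lemma subst_el_vars xs t : subst_el (combine xs (map PVar xs)) t = t.
Proof.
  induction t using pelem_nested_ind; simpl.
  - apply assoc_vars.
  - f_equal. induction H; simpl; auto. rewrite H, IHForall; auto.
Qed.

Lemma subst_ty_vars xs A : subst_ty (combine xs (map PVar xs)) A = A.
Proof.
  destruct A; simpl. f_equal. induction l; simpl; auto. rewrite subst_el_vars, IHl; auto.
Qed.

Lemma OV_ovars G : OV G = map PVar (ovars G).
Proof. unfold OV, ovars. rewrite map_map. auto. Qed.

Lemma subst_ty_csub_OV G A : subst_ty (csub G (OV G)) A = A.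
Proof. unfold csub. rewrite OV_ovars. apply subst_ty_vars. Qed.

Lemma assoc_snoc_notin xs s x b y : ~ In x xs -> length xs = length s ->
  assoc (combine (xs ++ [x]) (s ++ [b])) y = assoc (combine (x :: xs) (b :: s)) y.
Proof.
  revert s; induction xs; intros s Hn Hl; destruct s; simpl in *; try discriminate; auto.
  injection Hl as Hl. rewrite IHxs by tauto. simpl.
  destruct (Nat.eqb y a) eqn:E1, (Nat.eqb y x) eqn:E2; auto.
  apply Nat.eqb_eq in E1, E2; subst. tauto.
Qed.

Lemma assoc_rev xs s y : NoDup xs -> length xs = length s ->
  assoc (combine xs s) y = assoc (combine (rev xs) (rev s)) y.
Proof.
  revert s; induction xs using rev_ind; intros s Hn Hl.
  - destruct s; simpl in *; try discriminate; auto.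
  - destruct s using rev_ind; [rewrite length_app in Hl; simpl in Hl; lia|].
    clear IHs. rewrite !length_app in Hl; simpl in Hl.
    assert (Hl' : length xs = length s) by lia.
    apply NoDup_app_remove_r in Hn as Hn1.
    assert (Hx : ~ In x xs).
    { intros Hin. apply NoDup_remove_2 in Hn. rewrite app_nil_r in Hn. auto. }
    rewrite assoc_snoc_notin by auto. rewrite !rev_app_distr. simpl.
    destruct (Nat.eqb y x); auto.
Qed.

Lemma subst_el_rev xs s t : NoDup xs -> length xs = length s ->
  subst_el (combine xs s) t = subst_el (combine (rev xs) (rev s)) t.
Proof.
  intros Hn Hl. induction t using pelem_nested_ind; simpl.
  - apply assoc_rev; auto.
  - f_equal. induction H; simpl; auto. rewrite H, IHForall; auto.
Qed.

Lemma subst_ty_rev xs s A : NoDup xs -> length xs = length s ->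
  subst_ty (combine xs s) A = subst_ty (combine (rev xs) (rev s)) A.
Proof.
  intros Hn Hl. destruct A; simpl. f_equal. apply map_ext. intros; apply subst_el_rev; auto.
Qed.

Lemma subst_map_vars xs s : NoDup xs -> length xs = length s ->
  map (subst_el (combine xs s)) (map PVar xs) = s.
Proof.
  revert s; induction xs; intros s Hn Hl; destruct s; simpl in *; try discriminate; auto.
  rewrite Nat.eqb_refl. f_equal. inversion Hn; subst.
  rewrite <- (IHxs s) at 2 by auto. apply map_ext_in. intros t Ht.
  apply in_map_iff in Ht. destruct Ht as [z [<- Hz]]. simpl.
  destruct (Nat.eqb z a) eqn:E; auto. apply Nat.eqb_eq in E; subst; tauto.
Qed.

Lemma firstn_ovars_snoc Dl p k : k <= length Dl -> firstn k (ovars (Dl ++ [p])) = firstn k (ovars Dl).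
Proof. intros. unfold ovars. rewrite map_app, firstn_app, length_map.
  replace (k - length Dl) with 0 by lia. rewrite app_nil_r. auto. Qed.

Lemma firstn_snoc {T} (l : list T) x k : k <= length l -> firstn k (l ++ [x]) = firstn k l.
Proof. intros. rewrite firstn_app. replace (k - length l) with 0 by lia. rewrite app_nil_r. auto. Qed.

Definition comp_ty (G : ctx) (s : list pelem) (k : nat) : pty :=
  subst_ty (combine (firstn k (ovars G)) (firstn k s)) (snd (nth k G (0, dummy_ty))).

Lemma comp_ty_snoc_lt G p s b k : k < length G -> length s = length G ->
  comp_ty (G ++ [p]) (s ++ [b]) k = comp_ty G s k.
Proof.
  intros Hk Hl. unfold comp_ty. rewrite app_nth1 by lia.
  rewrite firstn_ovars_snoc, firstn_snoc by lia. reflexivity.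
Qed.

Lemma comp_ty_snoc_last G p s b : length s = length G ->
  comp_ty (G ++ [p]) (s ++ [b]) (length G) = subst_ty (csub G s) (snd p).
Proof.
  intros Hl. unfold comp_ty, csub. rewrite nth_middle, firstn_ovars_snoc, firstn_snoc by lia.
  rewrite firstn_all2 by (unfold ovars; rewrite length_map; lia).
  rewrite firstn_all2 by lia. reflexivity.
Qed.

Lemma nth_snoc_last {T} (l : list T) x n d : n = length l -> nth n (l ++ [x]) d = x.
Proof. intros ->. apply nth_middle. Qed.

Lemma jctx_snoc_inv Sg G p : jctx Sg (G ++ [p]) ->
  jctx Sg G /\ jty Sg G (snd p) /\ fst p = fresh G.
Proof.
  intros H. inversion H.
  - destruct G; discriminate.
  - apply app_inj_tail in H0. destruct H0; subst. simpl. auto.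
Qed.

Lemma jctx_nodup Sg G : jctx Sg G -> NoDup (ovars G).
Proof.
  induction G as [|p G IH] using rev_ind; intros H.
  - constructor.
  - apply jctx_snoc_inv in H as [H1 [H2 H3]]. unfold ovars. rewrite map_app. simpl.
    apply NoDup_app; auto. repeat constructor; auto.
    intros x Hx [E|[]]. subst x. unfold fresh in H3. rewrite H3 in Hx. apply (fr_notin _ Hx).
Qed.

Lemma jctx_snoc_in_last Sg G x A B : jctx Sg (G ++ [(x,B)]) -> In (x, A) (G ++ [(x,B)]) -> A = B.
Proof.
  intros H Hin. apply jctx_snoc_inv in H as [_ [_ Hx]]. simpl in Hx.
  apply in_app_or in Hin. destruct Hin as [Hin|[E|[]]].
  - exfalso. apply (fr_notin (ovars G)). unfold fresh in Hx. rewrite <- Hx. apply in_map_iff. exists (x,A); auto.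
  - congruence.
Qed.

Lemma judgements_mono (Sg Sg' : presig) : (forall d, Sg d -> Sg' d) ->
  (forall G, jctx Sg G -> jctx Sg' G) /\
  (forall G A, jty Sg G A -> jty Sg' G A) /\
  (forall G t A, jtm Sg G t A -> jtm Sg' G t A).
Proof.
  intros Hs. apply jall_mind; intros; econstructor; eauto.
Qed.

Section Judgements.
Variable Sg : presig.

Lemma judgements_weaken :
  (forall G A, jty Sg G A -> forall G', jctx Sg G' -> incl G G' -> jty Sg G' A) /\
  (forall G t A, jtm Sg G t A -> forall G', jctx Sg G' -> incl G G' -> jtm Sg G' t A).
Proof.
  assert (H := jall_mind Sg (fun _ _ => True)
    (fun G A _ => forall G', jctx Sg G' -> incl G G' -> jty Sg G' A)
    (fun G t A _ => forall G', jctx Sg G' -> incl G G' -> jtm Sg G' t A)).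
  destruct H as [_ [H1 H2]]; auto.
  - intros; econstructor; eauto.
  - intros; econstructor; eauto.
  - intros; econstructor; eauto.
Qed.

Lemma jctx_jty_in G x A : jctx Sg G -> In (x, A) G -> jty Sg G A.
Proof.
  induction G as [|[y B] G IH] using rev_ind; intros H Hin; [destruct Hin|].
  pose proof H as H'. apply jctx_snoc_inv in H as [H0 [HB _]].
  apply (proj1 judgements_weaken) with (G := G); auto; [|intros z Hz; apply in_or_app; auto].
  apply in_app_or in Hin. destruct Hin as [Hin|[E|[]]]; auto. injection E as <- <-. auto.
Qed.

Lemma nth_OV G k : k < length G -> nth k (OV G) dummy_el = PVar (fst (nth k G (0, dummy_ty))).
Proof.
  revert k; induction G; intros k Hk; simpl in *; [lia|]. destruct k; auto. apply IHG. lia.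
Qed.

Lemma firstn_OV G k : firstn k (OV G) = map PVar (firstn k (ovars G)).
Proof. rewrite OV_ovars, firstn_map. auto. Qed.

Lemma cmap_OV_incl G' G0 : jctx Sg G' -> jctx Sg G0 -> incl G0 G' -> cmap Sg G' G0 (OV G0).
Proof.
  intros H1 H2 Hi. split; [auto|split; [auto|split]].
  - unfold OV. rewrite length_map; auto.
  - intros k Hk. rewrite nth_OV by auto. rewrite firstn_OV, subst_ty_vars.
    constructor; auto. apply Hi. rewrite <- surjective_pairing. apply nth_In; auto.
Qed.

Lemma judgements_vars :
  (forall G A, jty Sg G A -> incl (vars_ty A) (ovars G)) /\
  (forall G t A, jtm Sg G t A -> incl (vars_el t) (ovars G)).
Proof.
  assert (H := jall_mind Sg (fun _ _ => True)
    (fun G A _ => incl (vars_ty A) (ovars G))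
    (fun G t A _ => incl (vars_el t) (ovars G))).
  destruct H as [_ [H1 H2]]; auto.
  - intros Dl Sy D s _ _ _ _ _ Hl _ IH. simpl. intros x Hx.
    apply in_flat_map in Hx. destruct Hx as [t [Ht Hx]].
    destruct (In_nth _ _ dummy_el Ht) as [k [Hk Ek]]. rewrite Hl in Hk.
    specialize (IH k Hk). rewrite Ek in IH. auto.
  - intros G x A _ _ Hin. simpl. intros y [<-|[]]. apply in_map_iff. exists (x, A); auto.
  - intros Dl g U D s _ _ _ _ _ Hl _ IH _ _. simpl. intros x Hx.
    apply in_flat_map in Hx. destruct Hx as [t [Ht Hx]].
    destruct (In_nth _ _ dummy_el Ht) as [k [Hk Ek]]. rewrite Hl in Hk.
    specialize (IH k Hk). rewrite Ek in IH. auto.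
Qed.

Lemma jctx_vars_nth G : jctx Sg G -> forall k, k < length G ->
  incl (vars_ty (snd (nth k G (0, dummy_ty)))) (firstn k (ovars G)).
Proof.
  induction G as [|[y B] G IH] using rev_ind; intros H k Hk; simpl in Hk; [lia|].
  apply jctx_snoc_inv in H as [H0 [HB _]]. rewrite length_app in Hk; simpl in Hk.
  unfold ovars. rewrite map_app, firstn_app, length_map.
  destruct (Nat.eq_dec k (length G)) as [->|Hne].
  - rewrite app_nth2 by lia. rewrite Nat.sub_diag. simpl.
    rewrite app_nil_r, firstn_all2 by (rewrite length_map; lia). apply (proj1 judgements_vars); auto.
  - rewrite app_nth1 by lia. replace (k - length G) with 0 by lia. simpl. rewrite app_nil_r.
    apply IH; auto. lia.
Qed.

Lemma assoc_map xs s g y : In y xs -> length xs = length s ->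
  assoc (combine xs (map g s)) y = g (assoc (combine xs s) y).
Proof.
  revert s; induction xs; intros s Hy Hl; destruct s; simpl in *; try discriminate; try contradiction.
  destruct (Nat.eqb y a) eqn:E; auto. apply IHxs; auto.
  destruct Hy; auto. subst. rewrite Nat.eqb_refl in E. discriminate.
Qed.

Lemma subst_el_comp xs s sg t : incl (vars_el t) xs -> length xs = length s ->
  subst_el sg (subst_el (combine xs s) t) = subst_el (combine xs (map (subst_el sg) s)) t.
Proof.
  intros Hv Hl. induction t as [y|g ts IH] using pelem_nested_ind; simpl in *.
  - rewrite assoc_map; auto. apply Hv. left; auto.
  - f_equal. rewrite map_map. apply map_ext_in. intros t Ht.
    rewrite Forall_forall in IH. apply IH; auto. intros z Hz. apply Hv.
    apply in_flat_map. eauto.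
Qed.

Lemma subst_ty_comp xs s sg A : incl (vars_ty A) xs -> length xs = length s ->
  subst_ty sg (subst_ty (combine xs s) A) = subst_ty (combine xs (map (subst_el sg) s)) A.
Proof.
  destruct A as [Sy ts]. simpl. intros Hv Hl. f_equal. rewrite map_map. apply map_ext_in.
  intros t Ht. apply subst_el_comp; auto. intros z Hz. apply Hv. apply in_flat_map. eauto.
Qed.

Lemma assoc_firstn xs s k y : In y (firstn k xs) -> length xs = length s ->
  assoc (combine (firstn k xs) (firstn k s)) y = assoc (combine xs s) y.
Proof.
  revert xs s; induction k; intros xs s Hy Hl; simpl in *; [contradiction|].
  destruct xs, s; simpl in *; try discriminate; try contradiction.
  destruct (Nat.eqb y v) eqn:E; auto. apply IHk; auto.
  destruct Hy; auto. subst. rewrite Nat.eqb_refl in E. discriminate.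
Qed.

Lemma subst_el_firstn xs s k t : incl (vars_el t) (firstn k xs) -> length xs = length s ->
  subst_el (combine (firstn k xs) (firstn k s)) t = subst_el (combine xs s) t.
Proof.
  intros Hv Hl. induction t as [y|g ts IH] using pelem_nested_ind; simpl in *.
  - apply assoc_firstn; auto. apply Hv; left; auto.
  - f_equal. apply map_ext_in. intros t Ht.
    rewrite Forall_forall in IH. apply IH; auto. intros z Hz. apply Hv.
    apply in_flat_map. eauto.
Qed.

Lemma subst_ty_firstn xs s k A : incl (vars_ty A) (firstn k xs) -> length xs = length s ->
  subst_ty (combine (firstn k xs) (firstn k s)) A = subst_ty (combine xs s) A.
Proof.
  destruct A as [Sy ts]. simpl. intros Hv Hl. f_equal. apply map_ext_in.
  intros t Ht. apply subst_el_firstn; auto. intros z Hz. apply Hv. apply in_flat_map. eauto.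
Qed.

Lemma assoc_nth xs s k : NoDup xs -> length xs = length s -> k < length xs ->
  assoc (combine xs s) (nth k xs 0) = nth k s dummy_el.
Proof.
  revert s k; induction xs; intros s k Hn Hl Hk; destruct s; simpl in *; try discriminate; try lia.
  inversion Hn; subst. destruct k.
  - rewrite Nat.eqb_refl. auto.
  - destruct (Nat.eqb (nth k xs 0) a) eqn:E.
    + apply Nat.eqb_eq in E. exfalso. apply H1. rewrite <- E. apply nth_In. lia.
    + apply IHxs; auto. lia.
Qed.

Lemma jtm_comp_subst G s' Dl D s k : jctx Sg G -> k < length G -> length s' = length G ->
  jtm Sg D (subst_el (csub Dl s) (nth k s' dummy_el))
    (subst_ty (csub Dl s) (subst_ty (combine (firstn k (ovars G)) (firstn k s'))
                                    (snd (nth k G (0, dummy_ty))))) ->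
  jtm Sg D (nth k (map (subst_el (csub Dl s)) s') dummy_el)
    (subst_ty (combine (firstn k (ovars G)) (firstn k (map (subst_el (csub Dl s)) s')))
              (snd (nth k G (0, dummy_ty)))).
Proof.
  intros HG Hk Hl H.
  rewrite nth_indep with (d' := subst_el (csub Dl s) dummy_el) by (rewrite length_map; lia).
  rewrite map_nth, firstn_map. rewrite subst_ty_comp in H; auto.
  - apply jctx_vars_nth; auto.
  - rewrite !length_firstn. unfold ovars. rewrite length_map. lia.
Qed.

Hypothesis decl_vars : forall G g U, Sg (DFun G g U) -> incl (vars_ty U) (ovars G).

Lemma judgements_subst :
  (forall Dl A, jty Sg Dl A -> forall D s, cmap Sg D Dl s -> jty Sg D (subst_ty (csub Dl s) A)) /\
  (forall Dl t A, jtm Sg Dl t A -> forall D s, cmap Sg D Dl s ->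
      jtm Sg D (subst_el (csub Dl s) t) (subst_ty (csub Dl s) A)).
Proof.
  assert (H := jall_mind Sg (fun _ _ => True)
    (fun Dl A _ => forall D s, cmap Sg D Dl s -> jty Sg D (subst_ty (csub Dl s) A))
    (fun Dl t A _ => forall D s, cmap Sg D Dl s ->
      jtm Sg D (subst_el (csub Dl s) t) (subst_ty (csub Dl s) A))).
  destruct H as [_ [H1 H2]]; auto.
  - intros G Sy Dl s' HS _ _ HG _ Hl _ IH D s Hs. simpl.
    pose proof Hs as [HD [HDl [Hls _]]].
    apply R4 with (G := G); auto.
    + rewrite length_map; auto.
    + intros k Hk. exact (jtm_comp_subst G s' Dl D s k HG Hk Hl (IH k Hk D s Hs)).
  - intros Dl x A HDl _ Hin D s Hs. pose proof Hs as [HD [_ [Hls Hc]]].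
    destruct (In_nth Dl (x, A) ((0, dummy_ty) : var * pty) Hin) as [k [Hk Ek]].
    specialize (Hc k Hk). rewrite Ek in Hc. simpl in Hc.
    assert (Ex : x = nth k (ovars Dl) 0).
    { unfold ovars. rewrite nth_indep with (d' := fst (0, dummy_ty)) by (rewrite length_map; auto).
      rewrite map_nth, Ek. auto. }
    simpl. unfold csub. rewrite Ex, assoc_nth; auto.
    + rewrite <- subst_ty_firstn with (k := k); auto.
      * pose proof (jctx_vars_nth Dl HDl k Hk) as Hv. rewrite Ek in Hv. auto.
      * unfold ovars; rewrite length_map; auto.
    + eapply jctx_nodup; eauto.
    + unfold ovars; rewrite length_map; auto.
    + unfold ovars; rewrite length_map; auto.
  - intros G g U Dl s' HS _ _ HG _ Hl _ IH _ IHU D s Hs. simpl.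
    pose proof Hs as [HD [HDl [Hls _]]].
    specialize (IHU D s Hs). unfold csub in *.
    pose proof (decl_vars _ _ _ HS) as HvU.
    rewrite subst_ty_comp in *; auto; try (unfold ovars; rewrite length_map; auto).
    replace (combine (ovars G) (map (subst_el (combine (ovars Dl) s)) s'))
      with (csub G (map (subst_el (combine (ovars Dl) s)) s')) by auto.
    apply R5; auto.
    + rewrite length_map; auto.
    + intros k Hk. exact (jtm_comp_subst G s' Dl D s k HG Hk Hl (IH k Hk D s Hs)).
Qed.

Lemma cmap_snoc_inv D G p s b : cmap Sg D (G ++ [p]) (s ++ [b]) -> length s = length G ->
  cmap Sg D G s /\ jtm Sg D b (subst_ty (csub G s) (snd p)).
Proof.
  intros [HD [HG [Hl Hc]]] Hls. pose proof (jctx_snoc_inv _ _ _ HG) as [HG0 _].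
  split; [split; [auto|split; [auto|split; [auto|]]]|].
  - intros k Hk. specialize (Hc k ltac:(rewrite length_app; simpl; lia)).
    fold (comp_ty (G ++ [p]) (s ++ [b]) k) in Hc.
    rewrite comp_ty_snoc_lt, app_nth1 in Hc by lia. exact Hc.
  - specialize (Hc (length G) ltac:(rewrite length_app; simpl; lia)).
    fold (comp_ty (G ++ [p]) (s ++ [b]) (length G)) in Hc.
    rewrite comp_ty_snoc_last, nth_snoc_last in Hc by lia. exact Hc.
Qed.

Lemma cmap_OV Dl : jctx Sg Dl -> cmap Sg Dl Dl (OV Dl).
Proof. intros H. apply cmap_OV_incl; auto. intros z Hz; auto. Qed.

Lemma jty_decl_OV Dl Sy : Sg (DTy Dl Sy) -> jctx Sg Dl -> jty Sg Dl (PTy Sy (OV Dl)).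
Proof.
  intros HS H. destruct (cmap_OV Dl H) as [_ [_ [Hl Hc]]].
  eapply R4; eauto.
Qed.

Lemma jtm_decl_OV Dl g U : Sg (DFun Dl g U) -> jty Sg Dl U -> jtm Sg Dl (PApp g (OV Dl)) U.
Proof.
  intros HS HU. pose proof (jty_ctx _ _ _ HU) as H.
  destruct (cmap_OV Dl H) as [_ [_ [Hl Hc]]].
  rewrite <- (subst_ty_csub_OV Dl U). eapply R5; eauto. rewrite subst_ty_csub_OV. auto.
Qed.

Lemma subst_csub_OV Dl s : jctx Sg Dl -> length s = length Dl -> map (subst_el (csub Dl s)) (OV Dl) = s.
Proof.
  intros H Hl. unfold csub. rewrite OV_ovars. apply subst_map_vars.
  - eapply jctx_nodup; eauto.
  - unfold ovars; rewrite length_map; auto.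
Qed.
End Judgements.

Definition decP (P : Prop) : {P} + {~P} := excluded_middle_informative P.

Section Interp.
Variable C : Cwf.

(* A telescope presents an object as an iterated comprehension top.T1...Tn; contexts
   are interpreted as telescopes, so that their variables can be read off. *)
Inductive tele : Ob C -> Type :=
| tnil : tele top
| tcons : forall (Y : Ob C) (T : Ty Y), tele Y -> tele (ext Y T).

(* [rxs] lists the variables of the telescope innermost first. *)
Fixpoint interp_var (rxs : list var) {X : Ob C} (tl : tele X) (y : var) {struct tl} : option (Tm X) :=
  match tl in tele X0 return option (Tm X0) with
  | tnil => None
  | tcons Y T tl' => match rxs with
      | [] => None
      | x :: rxs' => if Nat.eqb y x then Some (vv Y T)
                    else option_map (fun v => msub v (pr Y T)) (interp_var rxs' tl' y)
      end
  end.

(* The morphism into a telescope with the given components, innermost first; it is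
   undefined unless every component has the type the telescope requires. *)
Fixpoint interp_cmap {X Y : Ob C} (tl : tele Y) (rts : list (option (Tm X))) {struct tl}
  : option (Hom X Y) :=
  match tl in tele Y0 return option (Hom X Y0) with
  | tnil => match rts with [] => Some (to_top C X) | _ => None end
  | tcons Y T tl' => match rts with
      | Some b :: rts' => match interp_cmap tl' rts' with
          | Some h0 => match decP (tyof b = tsub T h0) with
                | left H => Some (pair h0 b H) | right _ => None end
          | None => None end
      | _ => None end
  end.

(* The semantic value of a type or function symbol declared in a context: the
   telescope interpreting that context and a type, resp. a term, over it. *)
Definition TyDatum := {Y : Ob C & (tele Y * Ty Y)%type}.
Definition TmDatum := {Y : Ob C & (tele Y * Tm Y)%type}.

Section Symbols.
Variable symT : tsym -> option TyDatum.
Variable symF : fsym -> option TmDatum.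

Fixpoint interp_tm (rxs : list var) {X : Ob C} (tl : tele X) (t : pelem) : option (Tm X) :=
  match t with
  | PVar y => interp_var rxs tl y
  | PApp g ts => match symF g with
      | Some (existT _ Y (tlg, tg)) =>
          option_map (fun h => msub tg h) (interp_cmap tlg (rev (map (interp_tm rxs tl) ts)))
      | None => None end
  end.

Definition interp_ty (rxs : list var) {X : Ob C} (tl : tele X) (A : pty) : option (Ty X) :=
  match A with
  | PTy Sy ts => match symT Sy with
      | Some (existT _ Y (tlg, T)) =>
          option_map (fun h => tsub T h) (interp_cmap tlg (rev (map (interp_tm rxs tl) ts)))
      | None => None end
  end.

Fixpoint interp_rctx (r : list (var * pty)) : option {X : Ob C & tele X} :=
  match r with
  | [] => Some (existT _ top tnil)
  | (x, A) :: r' => match interp_rctx r' with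
      | Some (existT _ X tl) =>
          if Nat.eqb x (fresh (rev r')) then
            match interp_ty (map fst r') tl A with
            | Some T => Some (existT _ (ext X T) (tcons X T tl))
            | None => None end
          else None
      | None => None end
  end.

Definition interp_ctx (G : ctx) := interp_rctx (rev G).
Definition rvars (G : ctx) := map fst (rev G).

Lemma pair_irr {D G : Ob C} {A : Ty G} (f1 f2 : Hom D G) (a1 a2 : Tm D) H1 H2 :
  f1 = f2 -> a1 = a2 -> pair (A:=A) f1 a1 H1 = pair f2 a2 H2.
Proof. intros <- <-. f_equal. apply proof_irrelevance. Qed.

Lemma interp_cmap_nat {X X' Y : Ob C} (tl : tele Y) (rts : list (option (Tm X))) k (h : Hom X' X) :
  interp_cmap tl rts = Some k ->
  interp_cmap tl (map (option_map (fun v => msub v h)) rts) = Some (cmp k h).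
Proof.
  revert rts k. induction tl as [|Y T tl IH]; intros rts k Hk; simpl in *.
  - destruct rts; [|discriminate]. injection Hk as <-. simpl. f_equal.
    rewrite (to_top_uniq C _ (cmp _ h)). reflexivity.
  - destruct rts as [|[b|] rts']; try discriminate.
    destruct (interp_cmap tl rts') as [h0|] eqn:E; [|discriminate].
    destruct (decP _) as [Hb|]; [|discriminate]. injection Hk as <-.
    simpl. rewrite (IH _ _ E).
    destruct (decP _) as [Hb'|Hn].
    + f_equal. symmetry. erewrite pair_nat. reflexivity.
    + exfalso. apply Hn. rewrite msub_ty, Hb, tsub_cmp. reflexivity.
Qed.

Lemma interp_cmap_comps {X Y : Ob C} (tl : tele Y) (rts : list (option (Tm X))) k :
  interp_cmap tl rts = Some k -> Forall (fun o => o <> None) rts.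
Proof.
  revert rts k. induction tl as [|Y T tl IH]; intros rts k Hk; simpl in *.
  - destruct rts; [constructor|discriminate].
  - destruct rts as [|[b|] rts']; try discriminate.
    destruct (interp_cmap tl rts') as [h0|] eqn:E; [|discriminate].
    constructor; [discriminate|]. eapply IH; eauto.
Qed.

Definition Realizes (rxsG : list var) {X'} (tl' : tele X') (rxsD : list var) {X} (tl : tele X)
  (rs : list pelem) (h : Hom X' X) : Prop :=
  forall y v, interp_var rxsD tl y = Some v ->
    interp_tm rxsG tl' (assoc (combine rxsD rs) y) = Some (msub v h).

Lemma interp_cmap_realizes rxsG {X'} (tl' : tele X') rxsD {X} (tl : tele X) rs h :
  interp_cmap tl (map (interp_tm rxsG tl') rs) = Some h -> Realizes rxsG tl' rxsD tl rs h.
Proof.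
  revert rxsD rs h. induction tl as [|Y T tl IH]; intros rxsD rs h Hh y v Hv; simpl in *.
  - discriminate.
  - destruct rxsD as [|x rxsD]; [discriminate|].
    destruct rs as [|b rs]; simpl in Hh; [discriminate|].
    destruct (interp_tm rxsG tl' b) as [bv|] eqn:Eb; [|discriminate].
    destruct (interp_cmap tl (map (interp_tm rxsG tl') rs)) as [h0|] eqn:E; [|discriminate].
    destruct (decP _) as [Hb|]; [|discriminate]. injection Hh as <-.
    simpl. destruct (Nat.eqb y x).
    + injection Hv as <-. rewrite pair_vv. auto.
    + destruct (interp_var rxsD tl y) as [v0|] eqn:Ev; [|discriminate]. injection Hv as <-.
      rewrite (IH _ _ _ E _ _ Ev). f_equal.
      rewrite <- msub_cmp, pair_pr. reflexivity.
Qed.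

Lemma map_interp_tm_subst rxsG {X'} (tl' : tele X') rxsD {X} (tl : tele X) rs h ts :
  Forall (fun t => forall v, interp_tm rxsD tl t = Some v ->
           interp_tm rxsG tl' (subst_el (combine rxsD rs) t) = Some (msub v h)) ts ->
  Forall (fun o => o <> None) (map (interp_tm rxsD tl) ts) ->
  map (interp_tm rxsG tl') (map (subst_el (combine rxsD rs)) ts) =
  map (option_map (fun v => msub v h)) (map (interp_tm rxsD tl) ts).
Proof.
  induction 1; intros Hd; simpl; auto. inversion Hd; subst.
  destruct (interp_tm rxsD tl x) as [v|] eqn:E; [|congruence].
  rewrite (H v eq_refl), IHForall; auto.
Qed.

Lemma interp_tm_subst rxsG {X'} (tl' : tele X') rxsD {X} (tl : tele X) rs h :
  Realizes rxsG tl' rxsD tl rs h ->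
  forall t v, interp_tm rxsD tl t = Some v ->
    interp_tm rxsG tl' (subst_el (combine rxsD rs) t) = Some (msub v h).
Proof.
  intros HR t. induction t as [y|g ts IH] using pelem_nested_ind; intros v Hv.
  - apply HR. exact Hv.
  - simpl in *. destruct (symF g) as [[Y [tlg tg]]|]; [|discriminate].
    destruct (interp_cmap tlg (rev (map (interp_tm rxsD tl) ts))) as [k|] eqn:E; [|discriminate].
    injection Hv as <-.
    pose proof (interp_cmap_comps _ _ _ E) as Hs. apply Forall_rev in Hs. rewrite rev_involutive in Hs.
    rewrite (map_interp_tm_subst _ _ _ _ _ _ _ IH Hs), <- map_rev, (interp_cmap_nat _ _ _ _ E). simpl.
    rewrite msub_cmp. reflexivity.
Qed.

Lemma interp_ty_subst rxsG {X'} (tl' : tele X') rxsD {X} (tl : tele X) rs h :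
  Realizes rxsG tl' rxsD tl rs h ->
  forall A T, interp_ty rxsD tl A = Some T ->
    interp_ty rxsG tl' (subst_ty (combine rxsD rs) A) = Some (tsub T h).
Proof.
  intros HR [Sy ts] T HT. simpl in *. destruct (symT Sy) as [[Y [tlg TS]]|]; [|discriminate].
  destruct (interp_cmap tlg (rev (map (interp_tm rxsD tl) ts))) as [k|] eqn:E; [|discriminate].
  injection HT as <-.
  pose proof (interp_cmap_comps _ _ _ E) as Hs. apply Forall_rev in Hs. rewrite rev_involutive in Hs.
  assert (IH : Forall (fun t => forall v, interp_tm rxsD tl t = Some v ->
           interp_tm rxsG tl' (subst_el (combine rxsD rs) t) = Some (msub v h)) ts).
  { apply Forall_forall. intros t _. apply interp_tm_subst; auto. }
  rewrite (map_interp_tm_subst _ _ _ _ _ _ _ IH Hs), <- map_rev, (interp_cmap_nat _ _ _ _ E). simpl.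
  rewrite tsub_cmp. reflexivity.
Qed.

Lemma interp_var_in rxs {X} (tl : tele X) y v : interp_var rxs tl y = Some v -> In y rxs.
Proof.
  revert rxs v. induction tl as [|Y T tl IH]; intros rxs v H; simpl in *; [discriminate|].
  destruct rxs as [|x rxs]; [discriminate|].
  destruct (Nat.eqb y x) eqn:E. apply Nat.eqb_eq in E; subst; left; auto.
  right. destruct (interp_var rxs tl y) eqn:E2; [|discriminate]. eapply IH; eauto.
Qed.

Lemma realizes_weaken rxs {X} (tl : tele X) x T :
  ~ In x rxs -> Realizes (x :: rxs) (tcons X T tl) rxs tl (map PVar rxs) (pr X T).
Proof.
  intros Hx y v Hv. rewrite assoc_vars. simpl.
  destruct (Nat.eqb y x) eqn:E.
  - apply Nat.eqb_eq in E; subst. apply interp_var_in in Hv. contradiction.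
  - rewrite Hv. reflexivity.
Qed.

Lemma interp_tm_weaken rxs {X} (tl : tele X) x T t v :
  ~ In x rxs -> interp_tm rxs tl t = Some v -> interp_tm (x :: rxs) (tcons X T tl) t = Some (msub v (pr X T)).
Proof.
  intros Hx Hv. rewrite <- (subst_el_vars rxs t). eapply interp_tm_subst; eauto. apply realizes_weaken; auto.
Qed.

Lemma interp_ty_weaken rxs {X} (tl : tele X) x T A U :
  ~ In x rxs -> interp_ty rxs tl A = Some U -> interp_ty (x :: rxs) (tcons X T tl) A = Some (tsub U (pr X T)).
Proof.
  intros Hx Hv. rewrite <- (subst_ty_vars rxs A). eapply interp_ty_subst; eauto. apply realizes_weaken; auto.
Qed.

Lemma interp_rctx_cons_inv x A r e : interp_rctx ((x, A) :: r) = Some e ->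
  exists X tl T, interp_rctx r = Some (existT _ X tl) /\ x = fresh (rev r) /\
    interp_ty (map fst r) tl A = Some T /\ e = existT _ (ext X T) (tcons X T tl).
Proof.
  simpl. destruct (interp_rctx r) as [[X tl]|] eqn:Er; [|discriminate].
  destruct (Nat.eqb x (fresh (rev r))) eqn:E; [|discriminate]. apply Nat.eqb_eq in E.
  destruct (interp_ty (map fst r) tl A) as [T|] eqn:ET; [|discriminate]. intros H; injection H as <-.
  exists X, tl, T. auto.
Qed.

Lemma fresh_rev_notin r : ~ In (fresh (rev r)) (map fst r).
Proof.
  unfold fresh, ovars. intros H. apply (fr_notin (map fst (rev r))).
  rewrite map_rev in *. apply in_rev. rewrite rev_involutive. exact H.
Qed.

Lemma map_interp_tm_weaken rxs {X} (tl : tele X) x T ts :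
  ~ In x rxs -> Forall (fun o => o <> None) (map (interp_tm rxs tl) ts) ->
  map (interp_tm (x :: rxs) (tcons X T tl)) ts =
  map (option_map (fun v => msub v (pr X T))) (map (interp_tm rxs tl) ts).
Proof.
  intros Hx. induction ts as [|t ts IH]; intros Hs; simpl in *; auto.
  inversion Hs; subst. destruct (interp_tm rxs tl t) as [v|] eqn:E; [|congruence].
  rewrite (interp_tm_weaken _ _ _ _ _ _ Hx E), IH; auto.
Qed.

Lemma interp_rctx_id r X tl : interp_rctx r = Some (existT _ X tl) ->
  interp_cmap tl (map (interp_tm (map fst r) tl) (map PVar (map fst r))) = Some (idm X).
Proof.
  revert X tl. induction r as [|[x A] r IH]; intros X tl Hr.
  - simpl in Hr. injection Hr as <-. apply inj_pair2 in H; subst. simpl. f_equal.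
    symmetry. apply to_top_uniq.
  - apply interp_rctx_cons_inv in Hr as [X0 [tl0 [T [E0 [Ex [HT He]]]]]].
    assert (EX : X = ext X0 T) by exact (f_equal (@projT1 _ _) He). subst X.
    apply inj_pair2 in He. subst tl.
    pose proof (fresh_rev_notin r) as Hn. rewrite <- Ex in Hn.
    specialize (IH _ _ E0).
    simpl. rewrite Nat.eqb_refl.
    rewrite (map_interp_tm_weaken _ _ _ _ _ Hn (interp_cmap_comps _ _ _ IH)), (interp_cmap_nat _ _ _ _ IH).
    destruct (decP _) as [Hb|Hn2].
    + f_equal.
      assert (Hh : tyof (msub (vv X0 T) (idm (ext X0 T))) = tsub T (cmp (pr X0 T) (idm _)))
        by (rewrite msub_id, cmp_idr; apply vv_ty).
      rewrite <- (pair_eta C _ _ _ (idm _) Hh). apply pair_irr. rewrite cmp_idl, cmp_idr; auto. rewrite msub_id; auto.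
    + exfalso. apply Hn2. rewrite vv_ty, cmp_idl. reflexivity.
Qed.

End Symbols.
End Interp.

Section Definedness.
Variable C : Cwf.
Variable symT : tsym -> option (TyDatum C).
Variable symF : fsym -> option (TmDatum C).

Notation interp_tm := (interp_tm C symF).
Notation interp_ty := (interp_ty C symT symF).
Notation interp_rctx := (interp_rctx C symT symF).
Notation interp_ctx := (interp_ctx C symT symF).

Lemma rvars_ovars G : rvars G = rev (ovars G).
Proof. unfold rvars, ovars. rewrite map_rev. auto. Qed.

Lemma rvars_snoc G p : rvars (G ++ [p]) = fst p :: rvars G.
Proof. unfold rvars. rewrite rev_app_distr. auto. Qed.

Lemma interp_rctx_nodup r e : interp_rctx r = Some e -> NoDup (map fst r).
Proof.
  revert e; induction r as [|[x A] r IH]; intros e H; simpl; [constructor|].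
  apply interp_rctx_cons_inv in H as [X [tl [T [E [Ex _]]]]]. constructor; eauto.
  subst x. apply fresh_rev_notin.
Qed.

Lemma interp_ctx_nodup G e : interp_ctx G = Some e -> NoDup (ovars G).
Proof.
  unfold interp_ctx. intros H. apply interp_rctx_nodup in H. unfold ovars.
  apply NoDup_rev in H. rewrite map_rev, rev_involutive in H. auto.
Qed.

Lemma interp_ctx_snoc_inv G x A e : interp_ctx (G ++ [(x, A)]) = Some e ->
  exists X tl T, interp_ctx G = Some (existT _ X tl) /\ x = fresh G /\
    interp_ty (rvars G) tl A = Some T /\ e = existT _ (ext X T) (tcons C X T tl).
Proof.
  unfold interp_ctx. rewrite rev_app_distr. simpl rev at 1. simpl app. intros H.
  apply interp_rctx_cons_inv in H. rewrite rev_involutive in H. exact H.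
Qed.

Lemma interp_ctx_snoc G X tl A T : interp_ctx G = Some (existT _ X tl) -> interp_ty (rvars G) tl A = Some T ->
  interp_ctx (G ++ [(fresh G, A)]) = Some (existT _ (ext X T) (tcons C X T tl)).
Proof.
  unfold interp_ctx. rewrite rev_app_distr. simpl. intros H1 H2. rewrite H1, rev_involutive, Nat.eqb_refl.
  unfold rvars in H2. rewrite H2. auto.
Qed.

Lemma interp_var_defined G X tl x A : interp_ctx G = Some (existT _ X tl) -> In (x, A) G ->
  exists v T, interp_var C (rvars G) tl x = Some v /\ interp_ty (rvars G) tl A = Some T /\ tyof v = T.
Proof.
  unfold interp_ctx, rvars. intros H Hin. apply in_rev in Hin. revert X tl H Hin.
  induction (rev G) as [|[y B] r IH]; intros X tl H Hin; [destruct Hin|].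
  apply interp_rctx_cons_inv in H as [X0 [tl0 [T0 [E0 [Ey [HT He]]]]]].
  assert (EX : X = ext X0 T0) by exact (f_equal (@projT1 _ _) He). subst X.
  apply inj_pair2 in He. subst tl.
  pose proof (fresh_rev_notin r) as Hn. rewrite <- Ey in Hn.
  simpl map. simpl interp_var. destruct Hin as [E|Hin].
  - injection E as <- <-. rewrite Nat.eqb_refl. do 2 eexists. split; [reflexivity|].
    split; [apply interp_ty_weaken; eauto|]. apply vv_ty.
  - destruct (IH _ _ E0 Hin) as [v [T [Hv [HT' Hty]]]].
    assert (Hxy : x <> y). { intros ->. apply Hn. apply in_map_iff. exists (y, A); auto. }
    apply Nat.eqb_neq in Hxy. rewrite Hxy, Hv. simpl. do 2 eexists. split; [reflexivity|].
    split; [apply interp_ty_weaken; eauto|]. rewrite msub_ty, Hty. auto.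
Qed.

Definition CompsDefined (D : ctx) {X'} (tl' : tele C X') (Dl : ctx) (s : list pelem) :=
  forall k, k < length Dl ->
    exists v T, interp_tm (rvars D) tl' (nth k s dummy_el) = Some v /\
      interp_ty (rvars D) tl' (comp_ty Dl s k) = Some T /\ tyof v = T.

Lemma interp_cmap_defined D {X'} (tl' : tele C X') Dl Y tl s :
  interp_ctx Dl = Some (existT _ Y tl) -> length s = length Dl -> CompsDefined D tl' Dl s ->
  exists h, interp_cmap C tl (rev (map (interp_tm (rvars D) tl') s)) = Some h.
Proof.
  revert Y tl s. induction Dl as [|[y B] Dl IH] using rev_ind; intros Y tl s HE Hl HC.
  - destruct s; [|discriminate]. unfold interp_ctx in HE. simpl in HE. injection HE as <-.
    apply inj_pair2 in H. subst. simpl. eauto.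
  - destruct s as [|b s _] using rev_ind; [rewrite length_app in Hl; simpl in Hl; lia|].
    rewrite !length_app in Hl; simpl in Hl.
    apply interp_ctx_snoc_inv in HE as [Y0 [tl0 [T0 [E0 [Ey [HT He]]]]]].
    assert (EX : Y = ext Y0 T0) by exact (f_equal (@projT1 _ _) He). subst Y.
    apply inj_pair2 in He. subst tl.
    destruct (IH _ _ s E0 ltac:(lia)) as [h0 Hh0].
    { intros k Hk. destruct (HC k ltac:(rewrite length_app; simpl; lia)) as [v [T [H1 [H2 H3]]]].
      exists v, T. rewrite app_nth1 in H1 by lia. rewrite comp_ty_snoc_lt in H2 by lia. auto. }
    destruct (HC (length Dl) ltac:(rewrite length_app; simpl; lia)) as [v [T [H1 [H2 H3]]]].
    rewrite nth_snoc_last in H1 by lia. rewrite comp_ty_snoc_last in H2 by lia. simpl in H2.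
    unfold csub in H2. rewrite subst_ty_rev in H2 by (eauto using interp_ctx_nodup; unfold ovars; rewrite length_map; lia).
    rewrite <- rvars_ovars in H2.
    rewrite <- map_rev in Hh0.
    pose proof (interp_cmap_realizes C symF _ _ (rvars Dl) _ _ _ Hh0) as HR.
    pose proof (interp_ty_subst C symT symF _ _ _ _ _ _ HR _ _ HT) as HT'. rewrite H2 in HT'.
    injection HT' as HT'.
    rewrite map_app, rev_app_distr. simpl. rewrite H1. rewrite <- map_rev, Hh0.
    destruct (decP _) as [Hd|Hd]; eauto. exfalso. apply Hd. congruence.
Qed.

Definition symbols_wf (Sg : presig) : Prop :=
  (forall Dl Sy, Sg (DTy Dl Sy) -> exists Y tl T,
     symT Sy = Some (existT _ Y (tl, T)) /\ interp_ctx Dl = Some (existT _ Y tl)) /\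
  (forall Dl g U, Sg (DFun Dl g U) -> exists Y tl t T,
     symF g = Some (existT _ Y (tl, t)) /\ interp_ctx Dl = Some (existT _ Y tl) /\
     interp_ty (rvars Dl) tl U = Some T /\ tyof t = T).

Section Defined.
Variable Sg : presig.
Hypothesis Hwf : symbols_wf Sg.

Lemma interp_defined :
  (forall G, jctx Sg G -> exists X tl, interp_ctx G = Some (existT _ X tl)) /\
  (forall G A, jty Sg G A -> forall X tl, interp_ctx G = Some (existT _ X tl) ->
      exists T, interp_ty (rvars G) tl A = Some T) /\
  (forall G t A, jtm Sg G t A -> forall X tl, interp_ctx G = Some (existT _ X tl) ->
      exists v T, interp_tm (rvars G) tl t = Some v /\ interp_ty (rvars G) tl A = Some T /\ tyof v = T).
Proof.
  apply (jall_mind Sg (fun G _ => exists X tl, interp_ctx G = Some (existT _ X tl))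
    (fun G A _ => forall X tl, interp_ctx G = Some (existT _ X tl) -> exists T, interp_ty (rvars G) tl A = Some T)
    (fun G t A _ => forall X tl, interp_ctx G = Some (existT _ X tl) ->
      exists v T, interp_tm (rvars G) tl t = Some v /\ interp_ty (rvars G) tl A = Some T /\ tyof v = T)).
  - exists top, (tnil C). reflexivity.
  - intros G A _ [X [tl HX]] _ HA. destruct (HA _ _ HX) as [T HT].
    eexists; eexists. apply interp_ctx_snoc; eauto.
  - intros Dl Sy D s HS _ _ _ _ Hl _ IHs X tl HX.
    destruct (proj1 Hwf _ _ HS) as [Y [tlg [T [Hp HE]]]].
    destruct (interp_cmap_defined D tl Dl Y tlg s HE Hl) as [h Hh].
    { intros k Hk. apply IHs; auto. }
    simpl. rewrite Hp, Hh. simpl. eauto.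
  - intros G x A _ _ Hin X tl HX. apply interp_var_defined; auto.
  - intros Dl g U D s HS _ _ _ _ Hl _ IHs _ IHU X tl HX.
    destruct (proj2 Hwf _ _ _ HS) as [Y [tlg [t [T [Hp [HE [HT Ht]]]]]]].
    destruct (interp_cmap_defined D tl Dl Y tlg s HE Hl) as [h Hh].
    { intros k Hk. apply IHs; auto. }
    simpl. rewrite Hp, Hh. simpl. do 2 eexists. split; [reflexivity|].
    split; [|rewrite msub_ty, Ht; reflexivity].
    unfold csub. rewrite subst_ty_rev by (eauto using interp_ctx_nodup; unfold ovars; rewrite length_map; lia).
    rewrite <- rvars_ovars. rewrite <- map_rev in Hh.
    eapply interp_ty_subst; eauto. apply interp_cmap_realizes. exact Hh.
Qed.
End Defined.
End Definedness.

Lemma existT_eq_rect {A : Type} {P : A -> Type} (x y : A) (p : P x) (e : x = y) :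
  existT P y (eq_rect x P p y e) = existT P x p.
Proof. destruct e. reflexivity. Qed.

Section Mor.
Variable C : Cwf.
Variable Sg : presig.
Variable M : FsMor Sg C.

Lemma jctx_removelast G (H : jctx Sg G) : G <> [] ->
  jctx Sg (removelast G) /\ jty Sg (removelast G) (snd (last G (0, dummy_ty))) /\
  G = removelast G ++ [(fresh (removelast G), snd (last G (0, dummy_ty)))].
Proof.
  intros Hne. pose proof (app_removelast_last ((0, dummy_ty) : var * pty) Hne) as E.
  rewrite E in H. apply jctx_snoc_inv in H as [H1 [H2 H3]]. split; auto. split; auto.
  rewrite E at 1. f_equal. f_equal. apply injective_projections; simpl; auto.
Qed.

Lemma length_S_nonnil (G : ctx) n : length G = S n -> G <> [].
Proof. intros H ->. discriminate. Qed.

Lemma length_removelast_S (G : ctx) n : length G = S n -> length (removelast G) = n.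
Proof.
  intros H. pose proof (app_removelast_last ((0, dummy_ty) : var * pty) (length_S_nonnil G n H)) as E.
  rewrite E in H. rewrite length_app in H. simpl in H. lia.
Qed.

(* The telescope on M(Gamma) provided by M's preservation of the terminal object and of
   comprehension; Gamma is split at its last entry, by recursion on its length. *)
Fixpoint mor_teleN (n : nat) : forall (G : ctx) (H : jctx Sg G), length G = n ->
    tele C (Fo M (exist _ G H)) :=
  match n as n0 return forall (G : ctx) (H : jctx Sg G), length G = n0 ->
      tele C (Fo M (exist _ G H)) with
  | 0 => fun G H Hn => eq_rect top (tele C) (tnil C) _
           (eq_sym (F_top Sg C M (exist _ G H) (proj1 (length_zero_iff_nil G) Hn)))
  | S n' => fun G H Hn =>
      let I := jctx_removelast G H (length_S_nonnil G n' Hn) in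
      eq_rect _ (tele C)
        (tcons C _ (sg M (exist _ (snd (last G (0, dummy_ty))) (proj1 (proj2 I))
                     : FTy Sg (exist _ (removelast G) (proj1 I))))
          (mor_teleN n' (removelast G) (proj1 I) (length_removelast_S G n' Hn))) _
        (eq_sym (F_ext Sg C M (exist _ (removelast G) (proj1 I))
           (exist _ (snd (last G (0, dummy_ty))) (proj1 (proj2 I))) (exist _ G H) (proj2 (proj2 I))))
  end.

Definition mor_tele (G : ctx) (H : jctx Sg G) : tele C (Fo M (exist _ G H)) :=
  mor_teleN (length G) G H eq_refl.

Definition mor_ctx (G : ctx) (H : jctx Sg G) : {X : Ob C & tele C X} :=
  existT _ (Fo M (exist _ G H)) (mor_tele G H).

Lemma mor_teleN_tcons_cong n1 n2 G1 G2 H1 H2 Hn1 Hn2 B1 B2 HB1 HB2 : G1 = G2 -> B1 = B2 ->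
  existT (fun X => tele C X) _ (tcons C _ (sg M (exist _ B1 HB1 : FTy Sg (exist _ G1 H1)))
     (mor_teleN n1 G1 H1 Hn1)) =
  existT (fun X => tele C X) _ (tcons C _ (sg M (exist _ B2 HB2 : FTy Sg (exist _ G2 H2)))
     (mor_teleN n2 G2 H2 Hn2)).
Proof.
  intros <- <-. assert (n1 = n2) as En by congruence. destruct En.
  assert (H1 = H2) by apply proof_irrelevance. subst H2.
  assert (Hn1 = Hn2) by apply proof_irrelevance. subst Hn2.
  assert (HB1 = HB2) by apply proof_irrelevance. subst HB2. reflexivity.
Qed.

Lemma mor_ctx_nil H : mor_ctx [] H = existT _ top (tnil C).
Proof. unfold mor_ctx, mor_tele. simpl. apply existT_eq_rect. Qed.

Lemma mor_ctx_snoc G0 B H H0 HB :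
  mor_ctx (G0 ++ [(fresh G0, B)]) H =
  existT _ (ext (Fo M (exist _ G0 H0)) (sg M (exist _ B HB : FTy Sg (exist _ G0 H0))))
    (tcons C _ _ (mor_tele G0 H0)).
Proof.
  unfold mor_ctx, mor_tele.
  match goal with |- _ = ?R => assert (Aux : forall n (Hn : length (G0 ++ [(fresh G0, B)]) = n),
    existT (fun X => tele C X) _ (mor_teleN n _ H Hn) = R); [|exact (Aux _ eq_refl)] end.
  intros n Hn. destruct n as [|n]; [exfalso; pose proof Hn as Hn'; rewrite length_app in Hn'; simpl in Hn'; lia|].
  simpl mor_teleN. rewrite existT_eq_rect. apply mor_teleN_tcons_cong.
  - apply removelast_last.
  - rewrite last_last. auto.
Qed.

(* Comprehension is preserved by M only up to an equality [e] of objects, so the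
   telescope of M(Gamma, x:B) is a transport of that of M(Gamma) extended by M(B). *)
Lemma interp_var_last_of_cast {Y : Ob C} (tl : tele C Y) X0 T0 tl0 rxs y
  (p : existT (fun X => tele C X) Y tl = existT _ (ext X0 T0) (tcons C X0 T0 tl0))
  (e : Y = ext X0 T0) (w : Tm Y) :
  castTm e w = vv X0 T0 -> interp_var C (y :: rxs) tl y = Some w.
Proof.
  revert e. assert (EY : Y = ext X0 T0) by exact (f_equal (@projT1 _ _) p). subst Y.
  apply inj_pair2 in p. subst tl. intros e. rewrite (proof_irrelevance _ e eq_refl). simpl.
  intros ->. rewrite Nat.eqb_refl. auto.
Qed.

Lemma interp_var_weaken_of_cast {Y : Ob C} (tl : tele C Y) X0 T0 tl0 rxs x y
  (p : existT (fun X => tele C X) Y tl = existT _ (ext X0 T0) (tcons C X0 T0 tl0))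
  (e : Y = ext X0 T0) (k : Hom Y X0) (v : Tm X0) :
  castDom e k = pr X0 T0 -> interp_var C rxs tl0 x = Some v -> x <> y ->
  interp_var C (y :: rxs) tl x = Some (msub v k).
Proof.
  revert e. assert (EY : Y = ext X0 T0) by exact (f_equal (@projT1 _ _) p). subst Y.
  apply inj_pair2 in p. subst tl. intros e. rewrite (proof_irrelevance _ e eq_refl). simpl.
  intros -> Hv Hxy. apply Nat.eqb_neq in Hxy. rewrite Hxy, Hv. auto.
Qed.

Lemma interp_cmap_snoc_of_cast {D Y : Ob C} (tl : tele C Y) X0 T0 tl0
  (p : existT (fun X => tele C X) Y tl = existT _ (ext X0 T0) (tcons C X0 T0 tl0))
  (e : Y = ext X0 T0) (k : Hom D Y) (h0 : Hom D X0) (b : Tm D) H rts :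
  castCod e k = pair h0 b H -> interp_cmap C tl0 rts = Some h0 -> interp_cmap C tl (Some b :: rts) = Some k.
Proof.
  revert e. assert (EY : Y = ext X0 T0) by exact (f_equal (@projT1 _ _) p). subst Y.
  apply inj_pair2 in p. subst tl. intros e. rewrite (proof_irrelevance _ e eq_refl). simpl.
  intros -> Hh. rewrite Hh. destruct (decP _) as [H'|Hn]; [|contradiction].
  f_equal. apply pair_irr; auto.
Qed.

Lemma interp_cmap_nil {D Y : Ob C} (tl : tele C Y)
  (p : existT (fun X => tele C X) Y tl = existT _ top (tnil C)) (k : Hom D Y) :
  interp_cmap C tl [] = Some k.
Proof.
  assert (EY : Y = top) by exact (f_equal (@projT1 _ _) p). subst Y.
  apply inj_pair2 in p. subst tl. simpl. f_equal. symmetry. apply to_top_uniq.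
Qed.

Lemma mor_interp_var G H x A : In (x, A) G -> forall HA Ht,
  interp_var C (rvars G) (mor_tele G H) x =
  Some (@th _ _ M (exist _ G H) (exist _ A HA) (exist _ (PVar x) Ht)).
Proof.
  revert H x A. induction G as [|[y B] G IH] using rev_ind; intros H x A Hin HA Ht; [destruct Hin|].
  pose proof H as H'. apply jctx_snoc_inv in H' as [H0 [HB Ey]]. simpl in Ey. subst y.
  rewrite rvars_snoc. simpl fst.
  pose proof (mor_ctx_snoc G B H H0 HB) as p. unfold mor_ctx in p.
  destruct (Nat.eq_dec x (fresh G)) as [->|Hne].
  - pose proof (jctx_snoc_in_last _ _ _ _ _ H Hin) as ->.
    eapply (interp_var_last_of_cast _ _ _ _ _ _ p).
    exact (th_vv Sg C M (exist _ G H0) (exist _ B HB) (exist _ _ H) eq_refl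
             (exist _ B HA) (exist _ _ Ht) eq_refl eq_refl).
  - assert (Hin0 : In (x, A) G).
    { apply in_app_or in Hin. destruct Hin as [Hin|[E|[]]]; auto. injection E; congruence. }
    assert (Hc : cmap Sg (G ++ [(fresh G, B)]) G (OV G)).
    { apply cmap_OV_incl; auto. intros z Hz; apply in_or_app; auto. }
    assert (HA0 : jty Sg G A) by (eapply jctx_jty_in; eauto).
    assert (Ht0 : jtm Sg G (PVar x) A) by (constructor; auto).
    assert (Eth := th_sub Sg C M (exist _ _ H) (exist _ G H0) (exist _ A HA0) (exist _ (OV G) Hc)
              (exist _ (PVar x) Ht0) (exist _ A HA) (exist _ (PVar x) Ht)
              (eq_sym (subst_ty_csub_OV G A)) ltac:(simpl; unfold csub; rewrite OV_ovars, assoc_vars; auto)).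
    eapply eq_trans; [|apply (f_equal Some); symmetry; exact Eth].
    eapply (interp_var_weaken_of_cast _ _ _ _ _ _ _ p).
    + exact (F_pr Sg C M (exist _ G H0) (exist _ B HB) (exist _ _ H) eq_refl
                 (exist _ (OV G) Hc) eq_refl).
    + apply IH; auto.
    + auto.
Qed.

Hypothesis fun_decl_wf : forall Dl g U, Sg (DFun Dl g U) -> jty Sg Dl U.

Lemma decl_vars : forall G g U, Sg (DFun G g U) -> incl (vars_ty U) (ovars G).
Proof. intros. apply (proj1 (judgements_vars Sg)). eauto. Qed.

Lemma th_irr G HG A1 A2 HA1 HA2 t1 t2 Ht1 Ht2 : A1 = A2 -> t1 = t2 ->
  @th _ _ M (exist _ G HG) (exist _ A1 HA1) (exist _ t1 Ht1) =
  @th _ _ M (exist _ G HG) (exist _ A2 HA2) (exist _ t2 Ht2).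
Proof.
  intros <- <-. assert (HA1 = HA2) by apply proof_irrelevance. subst HA2.
  assert (Ht1 = Ht2) by apply proof_irrelevance. subst Ht2. auto.
Qed.

Lemma mor_interp_cmap Dl D HD (F : pelem -> option (Tm (Fo M (exist _ D HD)))) : forall HDl s Hs,
  (forall k, k < length Dl -> forall A HA Ht,
     A = comp_ty Dl s k ->
     F (nth k s dummy_el) = Some (@th _ _ M (exist _ D HD) (exist _ A HA) (exist _ (nth k s dummy_el) Ht))) ->
  interp_cmap C (mor_tele Dl HDl) (rev (map F s)) = Some (@Fh _ _ M (exist _ D HD) (exist _ Dl HDl) (exist _ s Hs)).
Proof.
  induction Dl as [|[y B] Dl IH] using rev_ind; intros HDl s Hs Hc.
  - pose proof Hs as [_ [_ [Hl _]]]. destruct s; [|discriminate]. simpl.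
    pose proof (mor_ctx_nil HDl) as p. unfold mor_ctx in p. apply (interp_cmap_nil _ p).
  - pose proof HDl as H'. apply jctx_snoc_inv in H' as [H0 [HB Ey]]. simpl in Ey. subst y.
    assert (Hl : length s = S (length Dl)) by
      (destruct Hs as [_ [_ [Hl _]]]; simpl in Hl; rewrite length_app in Hl; simpl in Hl; lia).
    destruct s as [|b s _] using rev_ind; [simpl in Hl; lia|].
    rewrite length_app in Hl; simpl in Hl.
    destruct (cmap_snoc_inv Sg _ _ _ _ _ Hs ltac:(lia)) as [Hs0 Hb]. simpl in Hb.
    assert (HB' : jty Sg D (subst_ty (csub Dl s) B)).
    { apply (proj1 (judgements_subst Sg decl_vars)) with (Dl := Dl); auto. }
    rewrite map_app, rev_app_distr. simpl.
    pose proof (mor_ctx_snoc Dl B HDl H0 HB) as p. unfold mor_ctx in p.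
    assert (Hty : tyof (@th _ _ M (exist _ D HD) (exist _ _ HB') (exist _ b Hb)) =
                  tsub (sg M (exist _ B HB : FTy Sg (exist _ Dl H0)))
                       (@Fh _ _ M (exist _ D HD) (exist _ Dl H0) (exist _ s Hs0))).
    { rewrite th_ty. apply sg_sub. reflexivity. }
    assert (Fb : F b = Some (@th _ _ M (exist _ D HD) (exist _ _ HB') (exist _ b Hb))).
    { assert (Eb : nth (length Dl) (s ++ [b]) dummy_el = b) by (apply nth_snoc_last; lia).
      assert (Hb' : jtm Sg D (nth (length Dl) (s ++ [b]) dummy_el) (subst_ty (csub Dl s) B))
        by (rewrite Eb; exact Hb).
      pose proof (Hc (length Dl) ltac:(rewrite length_app; simpl; lia) _ HB' Hb') as Hcb.
      revert Hb' Hcb. rewrite Eb. intros Hb' Hcb. rewrite Hcb.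
      - f_equal. apply th_irr; auto.
      - rewrite comp_ty_snoc_last by lia. reflexivity. }
    rewrite Fb.
    apply (interp_cmap_snoc_of_cast _ _ _ _ p (F_ext Sg C M (exist _ Dl H0) (exist _ B HB) (exist _ _ HDl) eq_refl)
             _ _ _ Hty).
    + apply (th_pair Sg C M (exist _ D HD) (exist _ Dl H0) (exist _ B HB)
          (exist _ _ HDl) eq_refl (exist _ s Hs0) (exist _ _ HB') (exist _ b Hb) (exist _ _ Hs)
          eq_refl eq_refl).
    + apply IH. intros k Hk A HA Ht EA.
      assert (Hk' : k < length (Dl ++ [(fresh Dl, B)])) by (rewrite length_app; simpl; lia).
      assert (En : nth k s dummy_el = nth k (s ++ [b]) dummy_el) by (rewrite app_nth1; auto; lia).
      revert Ht. rewrite En. intros Ht. rewrite (Hc k Hk' A HA Ht); auto.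
      rewrite EA, comp_ty_snoc_lt by lia. reflexivity.
Qed.

(* The symbol data of M: its values at the types S(OV Gamma) and terms g(OV Gamma) of the
   declarations. *)
Definition symT_realized (symT : tsym -> option (TyDatum C)) : Prop :=
  forall Dl Sy (HS : Sg (DTy Dl Sy)) HDl HA,
  symT Sy = Some (existT _ (Fo M (exist _ Dl HDl))
     (mor_tele Dl HDl, @sg _ _ M (exist _ Dl HDl) (exist _ (PTy Sy (OV Dl)) HA))).

Definition symF_realized (symF : fsym -> option (TmDatum C)) : Prop :=
  forall Dl g U (HS : Sg (DFun Dl g U)) HDl HU Ht,
  symF g = Some (existT _ (Fo M (exist _ Dl HDl))
     (mor_tele Dl HDl, @th _ _ M (exist _ Dl HDl) (exist _ U HU) (exist _ (PApp g (OV Dl)) Ht))).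

Section Realized.
Variable symT : tsym -> option (TyDatum C).
Variable symF : fsym -> option (TmDatum C).
Hypothesis HT : symT_realized symT.
Hypothesis HF : symF_realized symF.

Lemma mor_interp :
  (forall G (H : jctx Sg G), interp_ctx C symT symF G = Some (mor_ctx G H)) /\
  (forall G A (HA : jty Sg G A) HG,
     interp_ty C symT symF (rvars G) (mor_tele G HG) A = Some (@sg _ _ M (exist _ G HG) (exist _ A HA))) /\
  (forall G t A (Ht : jtm Sg G t A) HG HA,
     interp_tm C symF (rvars G) (mor_tele G HG) t =
     Some (@th _ _ M (exist _ G HG) (exist _ A HA) (exist _ t Ht))).
Proof.
  apply (jall_mind Sg (fun G H => interp_ctx C symT symF G = Some (mor_ctx G H))
    (fun G A HA => forall HG,
     interp_ty C symT symF (rvars G) (mor_tele G HG) A = Some (@sg _ _ M (exist _ G HG) (exist _ A HA)))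
    (fun G t A Ht => forall HG HA,
     interp_tm C symF (rvars G) (mor_tele G HG) t =
     Some (@th _ _ M (exist _ G HG) (exist _ A HA) (exist _ t Ht)))).
  - rewrite mor_ctx_nil. reflexivity.
  - intros G A j IHG j0 IHA. unfold mor_ctx in IHG.
    rewrite (interp_ctx_snoc C symT symF _ _ _ _ _ IHG (IHA j)).
    rewrite (mor_ctx_snoc G A _ j j0). reflexivity.
  - intros Dl Sy D s HS j IHD j0 IHG Hl j1 IHs HG. simpl.
    assert (HA0 := jty_decl_OV Sg Dl Sy HS j0).
    rewrite (HT Dl Sy HS j0 HA0). cbn [projT1 projT2 fst snd].
    assert (Hs : cmap Sg D Dl s) by (split; [exact HG|split; [exact j0|split; [exact Hl|exact j1]]]).
    rewrite (mor_interp_cmap Dl D HG (interp_tm C symF (rvars D) (mor_tele D HG)) j0 s Hs).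
    + simpl. f_equal. symmetry. apply sg_sub. simpl. f_equal. symmetry. apply (subst_csub_OV Sg); auto.
    + intros k Hk A HA Ht EA. subst A. rewrite (IHs k Hk HG HA). f_equal. apply th_irr; auto.
  - intros G x A j IHG Hin HG HA. simpl. apply mor_interp_var. auto.
  - intros Dl g U D s HS j IHD j0 IHG Hl j1 IHs j2 IHU HG HA. simpl.
    assert (HU0 := fun_decl_wf _ _ _ HS). assert (Ht0 := jtm_decl_OV Sg _ _ _ HS HU0).
    rewrite (HF Dl g U HS j0 HU0 Ht0). cbn [projT1 projT2 fst snd].
    assert (Hs : cmap Sg D Dl s) by (split; [exact HG|split; [exact j0|split; [exact Hl|exact j1]]]).
    rewrite (mor_interp_cmap Dl D HG (interp_tm C symF (rvars D) (mor_tele D HG)) j0 s Hs).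
    + simpl. f_equal. symmetry. apply th_sub; simpl; auto.
      f_equal. symmetry. apply (subst_csub_OV Sg); auto.
    + intros k Hk A HA' Ht EA. subst A. rewrite (IHs k Hk HG HA'). f_equal. apply th_irr; auto.
Qed.
Lemma mor_interp_Fh D Gm HD HG (s : FHom Sg (exist _ D HD) (exist _ Gm HG)) :
  interp_cmap C (mor_tele Gm HG) (rev (map (interp_tm C symF (rvars D) (mor_tele D HD)) (proj1_sig s)))
  = Some (Fh M s).
Proof.
  destruct s as [s Hs]. apply mor_interp_cmap; auto.
  intros k Hk A HA Ht EA. apply (proj2 (proj2 (mor_interp))).
Qed.

End Realized.
End Mor.

Definition get_some {T : Type} (o : option T) : o <> None -> T :=
  match o as o' return o' <> None -> T with
  | Some x => fun _ => x
  | None => fun H => False_rect _ (H eq_refl)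
  end.

Lemma get_some_eq {T} (o : option T) H x : o = Some x -> get_some o H = x.
Proof. intros ->. reflexivity. Qed.

Lemma get_some_spec {T} (o : option T) H : o = Some (get_some o H).
Proof. destruct o; [reflexivity|contradiction]. Qed.

Section Build.
Variable C : Cwf.
Variable symT : tsym -> option (TyDatum C).
Variable symF : fsym -> option (TmDatum C).
Variable Sg : presig.
Hypothesis Hwf : symbols_wf C symT symF Sg.

Notation interp_tm := (interp_tm C symF).
Notation interp_ty := (interp_ty C symT symF).
Notation interp_ctx := (interp_ctx C symT symF).

Let Hdef := interp_defined C symT symF Sg Hwf.

Lemma interp_ctx_some G : jctx Sg G -> interp_ctx G <> None.
Proof. intros H. destruct (proj1 Hdef G H) as [X [tl E]]. rewrite E. discriminate. Qed.

Definition Ienv G (H : jctx Sg G) : {X : Ob C & tele C X} := get_some (interp_ctx G) (interp_ctx_some G H).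

Lemma Ienv_spec G H : interp_ctx G = Some (Ienv G H).
Proof. apply get_some_spec. Qed.

Lemma Ienv_det G H e : interp_ctx G = Some e -> Ienv G H = e.
Proof. intros E. pose proof (Ienv_spec G H). congruence. Qed.

Definition IFo (G : FObj Sg) : Ob C := projT1 (Ienv (proj1_sig G) (proj2_sig G)).
Definition Itele (G : FObj Sg) : tele C (IFo G) := projT2 (Ienv (proj1_sig G) (proj2_sig G)).

Lemma interp_ctx_IFo G : interp_ctx (proj1_sig G) = Some (existT _ (IFo G) (Itele G)).
Proof.
  unfold IFo, Itele. generalize (Ienv_spec (proj1_sig G) (proj2_sig G)).
  generalize (Ienv (proj1_sig G) (proj2_sig G)). intros [X tl] E. exact E.
Qed.

Lemma interp_ty_some G (A : FTy Sg G) : interp_ty (rvars (proj1_sig G)) (Itele G) (proj1_sig A) <> None.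
Proof.
  destruct (proj1 (proj2 Hdef) _ _ (proj2_sig A) _ _ (interp_ctx_IFo G)) as [T E]. rewrite E. discriminate.
Qed.

Definition Isg G (A : FTy Sg G) : Ty (IFo G) := get_some _ (interp_ty_some G A).

Lemma Isg_spec G A : interp_ty (rvars (proj1_sig G)) (Itele G) (proj1_sig A) = Some (Isg G A).
Proof. apply get_some_spec. Qed.

Lemma interp_tm_some G A (t : FTm Sg G A) : interp_tm (rvars (proj1_sig G)) (Itele G) (proj1_sig t) <> None.
Proof.
  destruct (proj2 (proj2 Hdef) _ _ _ (proj2_sig t) _ _ (interp_ctx_IFo G)) as [v [T [E _]]].
  rewrite E. discriminate.
Qed.

Definition Ith G A (t : FTm Sg G A) : Tm (IFo G) := get_some _ (interp_tm_some G A t).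

Lemma Ith_spec G A t : interp_tm (rvars (proj1_sig G)) (Itele G) (proj1_sig t) = Some (Ith G A t).
Proof. apply get_some_spec. Qed.

Lemma Ith_ty G A t : tyof (Ith G A t) = Isg G A.
Proof.
  destruct (proj2 (proj2 Hdef) _ _ _ (proj2_sig t) _ _ (interp_ctx_IFo G)) as [v [T [E1 [E2 E3]]]].
  rewrite (Isg_spec G A) in E2. rewrite (Ith_spec G A t) in E1. congruence.
Qed.

Lemma interp_cmap_some D G (s : FHom Sg D G) :
  interp_cmap C (Itele G) (rev (map (interp_tm (rvars (proj1_sig D)) (Itele D)) (proj1_sig s))) <> None.
Proof.
  destruct s as [sl Hs]. pose proof Hs as [HD [HG [Hl Hc]]]. simpl.
  destruct (interp_cmap_defined C symT symF (proj1_sig D) (Itele D) (proj1_sig G) _ _ sl (interp_ctx_IFo G) Hl) as [h E].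
  - intros k Hk. apply (proj2 (proj2 Hdef)); auto. apply interp_ctx_IFo.
  - rewrite E. discriminate.
Qed.

Definition IFh D G (s : FHom Sg D G) : Hom (IFo D) (IFo G) := get_some _ (interp_cmap_some D G s).

Lemma IFh_spec D G s :
  interp_cmap C (Itele G) (rev (map (interp_tm (rvars (proj1_sig D)) (Itele D)) (proj1_sig s))) = Some (IFh D G s).
Proof. apply get_some_spec. Qed.

Lemma ovars_nodup (G : FObj Sg) : NoDup (ovars (proj1_sig G)).
Proof. eapply jctx_nodup. exact (proj2_sig G). Qed.

Lemma length_FHom D G (s : FHom Sg D G) : length (ovars (proj1_sig G)) = length (proj1_sig s).
Proof. destruct s as [sl Hs]. simpl. destruct Hs as [_ [_ [Hl _]]]. unfold ovars. rewrite length_map. auto. Qed.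

Lemma IFh_realizes D G (s : FHom Sg D G) :
  Realizes C symF (rvars (proj1_sig D)) (Itele D) (rvars (proj1_sig G)) (Itele G) (rev (proj1_sig s)) (IFh D G s).
Proof. apply interp_cmap_realizes. rewrite map_rev. apply IFh_spec. Qed.

Lemma interp_tm_FHom D G (s : FHom Sg D G) t v :
  interp_tm (rvars (proj1_sig G)) (Itele G) t = Some v ->
  interp_tm (rvars (proj1_sig D)) (Itele D) (subst_el (csub (proj1_sig G) (proj1_sig s)) t) = Some (msub v (IFh D G s)).
Proof.
  intros E. unfold csub. rewrite subst_el_rev by (apply ovars_nodup || apply length_FHom).
  rewrite <- rvars_ovars. eapply interp_tm_subst; eauto. apply IFh_realizes.
Qed.

Lemma interp_ty_FHom D G (s : FHom Sg D G) A T :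
  interp_ty (rvars (proj1_sig G)) (Itele G) A = Some T ->
  interp_ty (rvars (proj1_sig D)) (Itele D) (subst_ty (csub (proj1_sig G) (proj1_sig s)) A) = Some (tsub T (IFh D G s)).
Proof.
  intros E. unfold csub. rewrite subst_ty_rev by (apply ovars_nodup || apply length_FHom).
  rewrite <- rvars_ovars. eapply interp_ty_subst; eauto. apply IFh_realizes.
Qed.

Lemma IFh_id G (i : FHom Sg G G) : proj1_sig i = OV (proj1_sig G) -> IFh G G i = idm (IFo G).
Proof.
  intros Hi. apply get_some_eq. rewrite Hi. pose proof (interp_ctx_IFo G) as E.
  unfold interp_ctx, interp_ctx in E. apply interp_rctx_id in E.
  rewrite OV_ovars, <- map_rev, <- map_rev. unfold rvars in *. rewrite map_rev in *.
  unfold ovars. exact E.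
Qed.

Lemma IFh_cmp D G T (f : FHom Sg G T) (g : FHom Sg D G) (h : FHom Sg D T) :
  proj1_sig h = map (subst_el (csub (proj1_sig G) (proj1_sig g))) (proj1_sig f) ->
  IFh D T h = cmp (IFh G T f) (IFh D G g).
Proof.
  intros Hh. apply get_some_eq. rewrite Hh. pose proof (IFh_spec G T f) as Ef.
  pose proof (interp_cmap_comps _ _ _ _ Ef) as Hs. apply Forall_rev in Hs. rewrite rev_involutive in Hs.
  rewrite <- (interp_cmap_nat _ _ _ _ _ Ef). f_equal. rewrite map_rev. f_equal.
  clear Ef Hh. induction (proj1_sig f) as [|t ts IH]; simpl; auto. inversion Hs; subst.
  destruct (interp_tm (rvars (proj1_sig G)) (Itele G) t) as [v|] eqn:E; [|congruence].
  rewrite (interp_tm_FHom D G g t v E), IH; auto.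
Qed.

Lemma IFo_top (T : FObj Sg) : proj1_sig T = [] -> IFo T = top.
Proof.
  intros H. unfold IFo. rewrite (Ienv_det _ _ (existT _ top (tnil C))); auto.
  rewrite H. reflexivity.
Qed.

Lemma Isg_sub D G (A : FTy Sg G) (f : FHom Sg D G) (B : FTy Sg D) :
  proj1_sig B = subst_ty (csub (proj1_sig G) (proj1_sig f)) (proj1_sig A) ->
  Isg D B = tsub (Isg G A) (IFh D G f).
Proof. intros HB. apply get_some_eq. rewrite HB. apply interp_ty_FHom. apply Isg_spec. Qed.

Lemma Ienv_ext G (A : FTy Sg G) (X : FObj Sg) :
  proj1_sig X = proj1_sig G ++ [(fresh (proj1_sig G), proj1_sig A)] ->
  Ienv (proj1_sig X) (proj2_sig X) = existT _ (ext (IFo G) (Isg G A)) (tcons C _ (Isg G A) (Itele G)).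
Proof.
  intros HX. apply Ienv_det. rewrite HX. apply interp_ctx_snoc; [apply interp_ctx_IFo|apply Isg_spec].
Qed.

Lemma IFo_ext G (A : FTy Sg G) (X : FObj Sg) :
  proj1_sig X = proj1_sig G ++ [(fresh (proj1_sig G), proj1_sig A)] ->
  IFo X = ext (IFo G) (Isg G A).
Proof. intros HX. unfold IFo at 1. rewrite (Ienv_ext G A X HX). reflexivity. Qed.

Lemma rvars_ext G (A : FTy Sg G) (X : FObj Sg) :
  proj1_sig X = proj1_sig G ++ [(fresh (proj1_sig G), proj1_sig A)] ->
  rvars (proj1_sig X) = fresh (proj1_sig G) :: rvars (proj1_sig G).
Proof. intros ->. apply rvars_snoc. Qed.

Lemma pr_of_interp Gl XG (tlG : tele C XG) T (eX : {X : Ob C & tele C X})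
  (p : eX = existT _ (ext XG T) (tcons C XG T tlG)) (e : projT1 eX = ext XG T) rxsX
  (Hr : rxsX = fresh Gl :: rvars Gl) ts (Hts : ts = OV Gl) pf :
  interp_ctx Gl = Some (existT _ XG tlG) ->
  castDom e (get_some (interp_cmap C tlG (rev (map (interp_tm rxsX (projT2 eX)) ts))) pf) = pr XG T.
Proof.
  subst eX rxsX ts. rewrite (proof_irrelevance _ e eq_refl). simpl. intros E. apply get_some_eq.
  unfold interp_ctx, interp_ctx in E. pose proof (interp_rctx_id _ _ _ _ _ _ E) as Hid.
  assert (Hn : ~ In (fresh Gl) (rvars Gl)).
  { unfold rvars. pose proof (fresh_rev_notin (rev Gl)) as H. rewrite rev_involutive in H. exact H. }
  rewrite OV_ovars, <- map_rev. unfold rvars in *. rewrite <- map_rev.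
  unfold ovars. rewrite <- (map_rev fst Gl).
  rewrite (map_interp_tm_weaken C symF _ _ _ _ _ Hn (interp_cmap_comps _ _ _ _ Hid)), (interp_cmap_nat _ _ _ _ _ Hid).
  rewrite cmp_idl. auto.
Qed.

Lemma vv_of_interp Gl XG (tlG : tele C XG) T (eX : {X : Ob C & tele C X})
  (p : eX = existT _ (ext XG T) (tcons C XG T tlG)) (e : projT1 eX = ext XG T) rxsX
  (Hr : rxsX = fresh Gl :: rvars Gl) t (Ht : t = PVar (fresh Gl)) pf :
  castTm e (get_some (interp_tm rxsX (projT2 eX) t) pf) = vv XG T.
Proof.
  subst eX rxsX t. rewrite (proof_irrelevance _ e eq_refl). simpl. apply get_some_eq.
  simpl. rewrite Nat.eqb_refl. auto.
Qed.

Lemma pair_of_interp {D : Ob C} XG (tlG : tele C XG) T (eX : {X : Ob C & tele C X})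
  (p : eX = existT _ (ext XG T) (tcons C XG T tlG)) (e : projT1 eX = ext XG T)
  (F : pelem -> option (Tm D)) ts f b (Hts : ts = f ++ [b]) hf vb H pf :
  interp_cmap C tlG (rev (map F f)) = Some hf -> F b = Some vb ->
  castCod e (get_some (interp_cmap C (projT2 eX) (rev (map F ts))) pf) = pair hf vb H.
Proof.
  subst eX ts. rewrite (proof_irrelevance _ e eq_refl). simpl. intros E1 E2. apply get_some_eq.
  rewrite map_app, rev_app_distr. simpl. rewrite E2, E1.
  destruct (decP _) as [H'|Hn]; [|contradiction]. f_equal. apply pair_irr; auto.
Qed.

Lemma IFh_pr G (A : FTy Sg G) (X : FObj Sg)
  (e : proj1_sig X = proj1_sig G ++ [(fresh (proj1_sig G), proj1_sig A)]) (h : FHom Sg X G) :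
  proj1_sig h = OV (proj1_sig G) ->
  castDom (IFo_ext G A X e) (IFh X G h) = pr (IFo G) (Isg G A).
Proof.
  intros Hh. unfold IFh, Itele.
  apply (pr_of_interp (proj1_sig G) _ _ _ _ (Ienv_ext G A X e) _ _ (rvars_ext G A X e) _ Hh).
  apply interp_ctx_IFo.
Qed.

Lemma Ith_sub D G (A : FTy Sg G) (f : FHom Sg D G) (a : FTm Sg G A)
  (B : FTy Sg D) (b : FTm Sg D B) :
  proj1_sig B = subst_ty (csub (proj1_sig G) (proj1_sig f)) (proj1_sig A) ->
  proj1_sig b = subst_el (csub (proj1_sig G) (proj1_sig f)) (proj1_sig a) ->
  Ith D B b = msub (Ith G A a) (IFh D G f).
Proof. intros _ Hb. apply get_some_eq. rewrite Hb. apply interp_tm_FHom. apply Ith_spec. Qed.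

Lemma Ith_vv G (A : FTy Sg G) (X : FObj Sg)
  (e : proj1_sig X = proj1_sig G ++ [(fresh (proj1_sig G), proj1_sig A)])
  (B : FTy Sg X) (v : FTm Sg X B) :
  proj1_sig B = proj1_sig A -> proj1_sig v = PVar (fresh (proj1_sig G)) ->
  castTm (IFo_ext G A X e) (Ith X B v) = vv (IFo G) (Isg G A).
Proof.
  intros _ Hv. unfold Ith, Itele.
  apply (vv_of_interp (proj1_sig G) _ (Itele G) _ _ (Ienv_ext G A X e) _ _ (rvars_ext G A X e) _ Hv).
Qed.

Lemma Ith_pair D G (A : FTy Sg G) (X : FObj Sg)
  (e : proj1_sig X = proj1_sig G ++ [(fresh (proj1_sig G), proj1_sig A)])
  (f : FHom Sg D G) (B : FTy Sg D) (b : FTm Sg D B) (h : FHom Sg D X) :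
  proj1_sig B = subst_ty (csub (proj1_sig G) (proj1_sig f)) (proj1_sig A) ->
  proj1_sig h = proj1_sig f ++ [proj1_sig b] ->
  forall H : tyof (Ith D B b) = tsub (Isg G A) (IFh D G f),
  castCod (IFo_ext G A X e) (IFh D X h) = pair (IFh D G f) (Ith D B b) H.
Proof.
  intros _ Hh H. unfold IFh at 1. unfold Itele at 1.
  apply (pair_of_interp _ (Itele G) _ _ (Ienv_ext G A X e) _ _ _ _ _ Hh).
  - apply IFh_spec.
  - apply Ith_spec.
Qed.

Definition interp_mor : FsMor Sg C :=
  Build_FsMor Sg C IFo IFh IFh_id IFh_cmp IFo_top Isg Isg_sub IFo_ext IFh_pr
    Ith Ith_ty Ith_sub Ith_vv Ith_pair.

End Build.

Section Transport.
Variable C : Cwf.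
Variable symT : tsym -> option (TyDatum C).
Variable symF : fsym -> option (TmDatum C).

Lemma castTy_interp_ty rG A X1 (tl1 : tele C X1) X2 (tl2 : tele C X2)
  (p : existT (fun X => tele C X) X1 tl1 = existT _ X2 tl2) (e : X1 = X2) x1 x2 :
  interp_ty C symT symF rG tl1 A = Some x1 -> interp_ty C symT symF rG tl2 A = Some x2 -> castTy e x1 = x2.
Proof.
  revert e x1. assert (E : X1 = X2) by exact (f_equal (@projT1 _ _) p). subst X2.
  apply inj_pair2 in p. subst tl2. intros e x1. rewrite (proof_irrelevance _ e eq_refl). simpl.
  congruence.
Qed.

Lemma castTm_interp_tm rG t X1 (tl1 : tele C X1) X2 (tl2 : tele C X2)
  (p : existT (fun X => tele C X) X1 tl1 = existT _ X2 tl2) (e : X1 = X2) x1 x2 :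
  interp_tm C symF rG tl1 t = Some x1 -> interp_tm C symF rG tl2 t = Some x2 -> castTm e x1 = x2.
Proof.
  revert e x1. assert (E : X1 = X2) by exact (f_equal (@projT1 _ _) p). subst X2.
  apply inj_pair2 in p. subst tl2. intros e x1. rewrite (proof_irrelevance _ e eq_refl). simpl.
  congruence.
Qed.

Lemma castHom_interp_cmap rD s XD1 (tlD1 : tele C XD1) XD2 (tlD2 : tele C XD2)
  XG1 (tlG1 : tele C XG1) XG2 (tlG2 : tele C XG2)
  (pD : existT (fun X => tele C X) XD1 tlD1 = existT _ XD2 tlD2)
  (pG : existT (fun X => tele C X) XG1 tlG1 = existT _ XG2 tlG2)
  (e1 : XD1 = XD2) (e2 : XG1 = XG2) h1 h2 :
  interp_cmap C tlG1 (rev (map (interp_tm C symF rD tlD1) s)) = Some h1 ->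
  interp_cmap C tlG2 (rev (map (interp_tm C symF rD tlD2) s)) = Some h2 -> castHom e1 e2 h1 = h2.
Proof.
  revert e1 e2 h1. assert (E : XD1 = XD2) by exact (f_equal (@projT1 _ _) pD). subst XD2.
  assert (E : XG1 = XG2) by exact (f_equal (@projT1 _ _) pG). subst XG2.
  apply inj_pair2 in pD. apply inj_pair2 in pG. subst tlD2 tlG2. intros e1 e2 h1.
  rewrite (proof_irrelevance _ e1 eq_refl), (proof_irrelevance _ e2 eq_refl). simpl.
  congruence.
Qed.
End Transport.

Lemma FsMor_ext {Sg : presig} {C : Cwf} (M1 M2 : FsMor Sg C)
  (E : forall G, Fo M1 G = Fo M2 G) :
  (forall D G (s : FHom Sg D G), castHom (E D) (E G) (Fh M1 s) = Fh M2 s) ->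
  (forall G (A : FTy Sg G), castTy (E G) (sg M1 A) = sg M2 A) ->
  (forall G A (t : FTm Sg G A), castTm (E G) (th M1 t) = th M2 t) ->
  M1 = M2.
Proof.
  destruct M1 as [Fo1 Fh1 Fh_id1 Fh_cmp1 F_top1 sg1 sg_sub1 F_ext1 F_pr1 th1 th_ty1 th_sub1 th_vv1 th_pair1].
  destruct M2 as [Fo2 Fh2 Fh_id2 Fh_cmp2 F_top2 sg2 sg_sub2 F_ext2 F_pr2 th2 th_ty2 th_sub2 th_vv2 th_pair2].
  simpl in *. intros Eh Es Et.
  assert (EF : Fo1 = Fo2) by (apply functional_extensionality; auto). subst Fo2.
  assert (EE : forall G, E G = eq_refl) by (intros; apply proof_irrelevance).
  assert (Fh1 = Fh2).
  { apply functional_extensionality_dep; intros D. apply functional_extensionality_dep; intros G.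
    apply functional_extensionality_dep; intros s. rewrite <- Eh, !EE. reflexivity. }
  subst Fh2.
  assert (sg1 = sg2).
  { apply functional_extensionality_dep; intros G. apply functional_extensionality_dep; intros A.
    rewrite <- Es, EE. reflexivity. }
  subst sg2.
  assert (th1 = th2).
  { apply functional_extensionality_dep; intros G. apply functional_extensionality_dep; intros A.
    apply functional_extensionality_dep; intros t. rewrite <- Et, EE. reflexivity. }
  subst th2.
  assert (Fh_id1 = Fh_id2) by apply proof_irrelevance. subst.
  assert (Fh_cmp1 = Fh_cmp2) by apply proof_irrelevance. subst.
  assert (F_top1 = F_top2) by apply proof_irrelevance. subst.
  assert (sg_sub1 = sg_sub2) by apply proof_irrelevance. subst.
  assert (F_ext1 = F_ext2) by apply proof_irrelevance. subst.
  assert (F_pr1 = F_pr2) by apply proof_irrelevance. subst.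
  assert (th_ty1 = th_ty2) by apply proof_irrelevance. subst.
  assert (th_sub1 = th_sub2) by apply proof_irrelevance. subst.
  assert (th_vv1 = th_vv2) by apply proof_irrelevance. subst.
  assert (th_pair1 = th_pair2) by apply proof_irrelevance. subst.
  reflexivity.
Qed.

Lemma tcons_transport {C : Cwf} X1 (tl1 : tele C X1) X2 (tl2 : tele C X2)
  (p : existT (fun X => tele C X) X1 tl1 = existT _ X2 tl2) (e : X1 = X2) T1 T2 :
  castTy e T1 = T2 ->
  existT (fun X => tele C X) (ext X1 T1) (tcons C X1 T1 tl1) = existT _ (ext X2 T2) (tcons C X2 T2 tl2).
Proof.
  revert e T1. assert (E : X1 = X2) by exact (f_equal (@projT1 _ _) p). subst X2.
  apply inj_pair2 in p. subst tl2. intros e T1. rewrite (proof_irrelevance _ e eq_refl). simpl.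
  intros ->. reflexivity.
Qed.

Lemma pack_transport {C : Cwf} {F : Ob C -> Type} (cast : forall X Y, X = Y -> F X -> F Y)
  (castid : forall X (x : F X), cast X X eq_refl x = x)
  X1 (tl1 : tele C X1) X2 (tl2 : tele C X2)
  (p : existT (fun X => tele C X) X1 tl1 = existT _ X2 tl2) (e : X1 = X2) T1 T2 :
  cast _ _ e T1 = T2 ->
  existT (fun X => (tele C X * F X)%type) X1 (tl1, T1) = existT _ X2 (tl2, T2).
Proof.
  revert e T1. assert (E : X1 = X2) by exact (f_equal (@projT1 _ _) p). subst X2.
  apply inj_pair2 in p. subst tl2. intros e T1. rewrite (proof_irrelevance _ e eq_refl). rewrite castid.
  intros ->. reflexivity.
Qed.

Lemma mor_ctx_transport {C : Cwf} {Sg1 Sg2 : presig} (M1 : FsMor Sg1 C) (M2 : FsMor Sg2 C)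
  (eo : forall Gm (H1 : jctx Sg1 Gm) (H2 : jctx Sg2 Gm), Fo M2 (exist _ Gm H2) = Fo M1 (exist _ Gm H1))
  (esg : forall Gm (H1 : jctx Sg1 Gm) (H2 : jctx Sg2 Gm) A (HA1 : jty Sg1 Gm A) (HA2 : jty Sg2 Gm A),
     castTy (eo Gm H1 H2) (@sg _ _ M2 (exist _ Gm H2) (exist _ A HA2)) = @sg _ _ M1 (exist _ Gm H1) (exist _ A HA1)) :
  forall Dl H1 H2, mor_ctx C Sg2 M2 Dl H2 = mor_ctx C Sg1 M1 Dl H1.
Proof.
  induction Dl as [|[y B] Dl IH] using rev_ind; intros H1 H2.
  - rewrite !mor_ctx_nil. auto.
  - pose proof H1 as H1'. apply jctx_snoc_inv in H1' as [H10 [HB1 Ey]]. simpl in Ey. subst y.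
    pose proof H2 as H2'. apply jctx_snoc_inv in H2' as [H20 [HB2 _]].
    rewrite (mor_ctx_snoc C Sg1 M1 Dl B H1 H10 HB1), (mor_ctx_snoc C Sg2 M2 Dl B H2 H20 HB2).
    apply (tcons_transport _ _ _ _ (IH H10 H20) (eo Dl H10 H20)). apply esg.
Qed.

Section Uniqueness.
Variable C : Cwf.
Variable Sg : presig.
Hypothesis fun_decl_wf : forall Dl g U, Sg (DFun Dl g U) -> jty Sg Dl U.
Variable symT : tsym -> option (TyDatum C).
Variable symF : fsym -> option (TmDatum C).

Lemma mor_unique_of_symbols (M1 M2 : FsMor Sg C) :
  symT_realized C Sg M1 symT -> symF_realized C Sg M1 symF ->
  symT_realized C Sg M2 symT -> symF_realized C Sg M2 symF -> M1 = M2.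
Proof.
  intros HT1 HF1 HT2 HF2.
  pose proof (mor_interp C Sg M1 fun_decl_wf symT symF HT1 HF1) as [A1 [A2 A3]].
  pose proof (mor_interp C Sg M2 fun_decl_wf symT symF HT2 HF2) as [B1 [B2 B3]].
  assert (P : forall Gm H, mor_ctx C Sg M1 Gm H = mor_ctx C Sg M2 Gm H).
  { intros Gm H. pose proof (A1 Gm H) as X1. rewrite (B1 Gm H) in X1. injection X1 as X1. auto. }
  apply (FsMor_ext M1 M2 (fun G : FObj Sg => match G as G' return Fo M1 G' = Fo M2 G' with
      exist _ Gm H => f_equal (@projT1 _ _) (P Gm H) end)).
  - intros [D HD] [Gm HG] s. simpl.
    apply (castHom_interp_cmap C symF (rvars D) (proj1_sig s) _ _ _ _ _ _ _ _ (P D HD) (P Gm HG)).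
    + apply (mor_interp_Fh C Sg M1 fun_decl_wf symT symF HT1 HF1 D Gm HD HG s).
    + apply (mor_interp_Fh C Sg M2 fun_decl_wf symT symF HT2 HF2 D Gm HD HG s).
  - intros [Gm HG] [A HA]. simpl.
    apply (castTy_interp_ty C symT symF (rvars Gm) A _ _ _ _ (P Gm HG)); auto.
  - intros [Gm HG] [A HA] [t Ht]. simpl.
    apply (castTm_interp_tm C symF (rvars Gm) t _ _ _ _ (P Gm HG)); auto.
Qed.
End Uniqueness.

Section Extension.
Variables (Sg : presig) (C : Cwf) (G : FsMor Sg C) (f : fsym) (Gf : ctx) (Uf : pty).
Hypothesis HSg : is_signature Sg.
Hypothesis Hf : forall (Gm : ctx) (U : pty), ~ Sg (DFun Gm f U).
Hypothesis HU : jty Sg Gf Uf.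
Variable a : Tm (Fo G (exist _ Gf (jty_ctx Sg Gf Uf HU))).
Hypothesis Ha : tyof a = @sg _ _ G (exist _ Gf (jty_ctx Sg Gf Uf HU)) (exist _ Uf HU).

Notation Sg' := (sig_add Sg (DFun Gf f Uf)).

Let ty_decl_wf : forall Dl Sy, Sg (DTy Dl Sy) -> jctx Sg Dl := proj1 (proj2 HSg).
Let fun_decl_wf : forall Dl g U, Sg (DFun Dl g U) -> jty Sg Dl U := proj2 (proj2 HSg).
Let ty_decl_unique : forall Dl Dl' Sy, Sg (DTy Dl Sy) -> Sg (DTy Dl' Sy) -> Dl = Dl' :=
  proj1 (proj2 (proj2 (proj1 HSg))).
Let fun_decl_unique : forall Dl Dl' g U U', Sg (DFun Dl g U) -> Sg (DFun Dl' g U') ->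
  Dl = Dl' /\ U = U' := proj2 (proj2 (proj2 (proj1 HSg))).

(* The symbol data read off from G, except that f is sent to a; the declaration of a
   symbol of Sigma is recovered by choice. *)
Definition symT_G (Sy : tsym) : option (TyDatum C) :=
  match decP (exists Dl, Sg (DTy Dl Sy)) with
  | left H =>
    let w := constructive_indefinite_description _ H in
    let HDl := ty_decl_wf _ _ (proj2_sig w) in
    Some (existT _ (Fo G (exist _ (proj1_sig w) HDl))
      (mor_tele C Sg G (proj1_sig w) HDl,
       @sg _ _ G (exist _ (proj1_sig w) HDl)
         (exist _ (PTy Sy (OV (proj1_sig w))) (jty_decl_OV Sg _ _ (proj2_sig w) HDl))))
  | right _ => None
  end.

Definition symF_Ga (g : fsym) : option (TmDatum C) :=
  if Nat.eq_dec g f then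
    Some (existT _ (Fo G (exist _ Gf (jty_ctx Sg Gf Uf HU))) (mor_tele C Sg G Gf (jty_ctx Sg Gf Uf HU), a))
  else match decP (exists p : ctx * pty, Sg (DFun (fst p) g (snd p))) with
  | left H =>
     let w := constructive_indefinite_description _ H in
     let HU0 := fun_decl_wf _ _ _ (proj2_sig w) in
     let HDl := jty_ctx _ _ _ HU0 in
     Some (existT _ (Fo G (exist _ (fst (proj1_sig w)) HDl))
       (mor_tele C Sg G (fst (proj1_sig w)) HDl,
        @th _ _ G (exist _ (fst (proj1_sig w)) HDl) (exist _ (snd (proj1_sig w)) HU0)
          (exist _ (PApp g (OV (fst (proj1_sig w)))) (jtm_decl_OV Sg _ _ _ (proj2_sig w) HU0))))
  | right _ => None end.

Lemma symT_G_realized : symT_realized C Sg G symT_G.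
Proof.
  intros Dl Sy HS HDl HA. unfold symT_G. destruct (decP _) as [H|H]; [|exfalso; apply H; eauto].
  destruct (constructive_indefinite_description _ H) as [Dl' HS']. cbv zeta. simpl.
  assert (Dl' = Dl) by (eapply ty_decl_unique; eauto). subst Dl'.
  generalize (jty_decl_OV Sg Dl Sy HS' (ty_decl_wf Dl Sy HS')). intros H2.
  rewrite (proof_irrelevance _ (ty_decl_wf Dl Sy HS') HDl), (proof_irrelevance _ H2 HA).
  reflexivity.
Qed.

Lemma symF_Ga_realized_Sg : symF_realized C Sg G symF_Ga.
Proof.
  intros Dl g U HS HDl HU0 Ht. unfold symF_Ga. destruct (Nat.eq_dec g f) as [->|Hn].
  { exfalso. eapply Hf; eauto. }
  destruct (decP _) as [H|H]; [|exfalso; apply H; exists (Dl, U); auto].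
  destruct (constructive_indefinite_description _ H) as [[Dl' U'] HS']. cbv zeta. simpl in *.
  destruct (fun_decl_unique _ _ _ _ _ HS HS') as [<- <-].
  generalize (jtm_decl_OV Sg Dl g U HS' (fun_decl_wf Dl g U HS')). intros H3.
  rewrite (proof_irrelevance _ (fun_decl_wf Dl g U HS') HU0).
  rewrite (proof_irrelevance _ (jty_ctx Sg Dl U HU0) HDl), (proof_irrelevance _ H3 Ht).
  reflexivity.
Qed.

Lemma symF_Ga_f : symF_Ga f =
  Some (existT _ (Fo G (exist _ Gf (jty_ctx Sg Gf Uf HU))) (mor_tele C Sg G Gf (jty_ctx Sg Gf Uf HU), a)).
Proof. unfold symF_Ga. destruct (Nat.eq_dec f f); [reflexivity|congruence]. Qed.

Let G_interp := mor_interp C Sg G fun_decl_wf symT_G symF_Ga symT_G_realized symF_Ga_realized_Sg.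

Lemma sig_add_DTy_inv Dl Sy : Sg' (DTy Dl Sy) -> Sg (DTy Dl Sy).
Proof. intros [H|H]; [auto|discriminate]. Qed.

Lemma sig_add_DFun_inv Dl g U : Sg' (DFun Dl g U) -> Sg (DFun Dl g U) \/ (Dl = Gf /\ g = f /\ U = Uf).
Proof. intros [H|H]; [auto|]. injection H; auto. Qed.

Let mono := judgements_mono Sg Sg' (fun d H => or_introl H).

Lemma fun_decl_wf' : forall Dl g U, Sg' (DFun Dl g U) -> jty Sg' Dl U.
Proof.
  intros Dl g U H. apply (proj1 (proj2 mono)). destruct (sig_add_DFun_inv _ _ _ H) as [H'|[-> [-> ->]]].
  - eapply fun_decl_wf; eauto.
  - auto.
Qed.

Lemma symbols_Ga_wf : symbols_wf C symT_G symF_Ga Sg'.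
Proof.
  split.
  - intros Dl Sy H. apply sig_add_DTy_inv in H. do 3 eexists. split.
    + apply (symT_G_realized Dl Sy H (ty_decl_wf _ _ H) (jty_decl_OV Sg _ _ H (ty_decl_wf _ _ H))).
    + apply (proj1 G_interp).
  - intros Dl g U H. destruct (sig_add_DFun_inv _ _ _ H) as [H'|[-> [-> ->]]].
    + do 4 eexists. split; [apply (symF_Ga_realized_Sg Dl g U H' (jty_ctx _ _ _ (fun_decl_wf _ _ _ H'))
         (fun_decl_wf _ _ _ H') (jtm_decl_OV Sg _ _ _ H' (fun_decl_wf _ _ _ H')))|].
      split; [apply (proj1 G_interp)|]. split; [apply (proj1 (proj2 G_interp))|]. apply th_ty.
    + do 4 eexists. split; [apply symF_Ga_f|].
      split; [apply (proj1 G_interp)|]. split; [apply (proj1 (proj2 G_interp) _ _ HU)|]. exact Ha.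
Qed.

Definition sends_f_to_a (M : FsMor Sg' C) (eo : EmbObjEq G M) : Prop :=
  forall (HG' : jctx Sg' Gf) (HU' : jty Sg' Gf Uf) (Ht' : jtm Sg' Gf (PApp f (OV Gf)) Uf),
    castTm (eo Gf (jty_ctx Sg Gf Uf HU) HG')
      (@th _ _ M (exist _ Gf HG') (exist _ Uf HU') (exist _ (PApp f (OV Gf)) Ht')) = a.

Definition G_ext : FsMor Sg' C := interp_mor C symT_G symF_Ga Sg' symbols_Ga_wf.

Lemma G_ext_tele Gm (H : jctx Sg Gm) (H' : jctx Sg' Gm) :
  existT (fun X => tele C X) (IFo C symT_G symF_Ga Sg' symbols_Ga_wf (exist _ Gm H'))
    (Itele C symT_G symF_Ga Sg' symbols_Ga_wf (exist _ Gm H')) = mor_ctx C Sg G Gm H.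
Proof.
  pose proof (interp_ctx_IFo C symT_G symF_Ga Sg' symbols_Ga_wf (exist _ Gm H')) as E1. simpl in E1.
  rewrite (proj1 G_interp Gm H) in E1. injection E1 as E1. auto.
Qed.

Lemma G_ext_obj : EmbObjEq G G_ext.
Proof. intros Gm H H'. exact (f_equal (@projT1 _ _) (G_ext_tele Gm H H')). Qed.

Lemma G_ext_restricts : EmbRest G G_ext G_ext_obj.
Proof.
  split; [|split].
  - intros D Gm HD HD' HG HG' s Hs Hs'. simpl.
    apply (castHom_interp_cmap C symF_Ga (rvars D) s _ _ _ _ _ _ _ _ (G_ext_tele D HD HD') (G_ext_tele Gm HG HG')).
    + apply (IFh_spec C symT_G symF_Ga Sg' symbols_Ga_wf (exist _ D HD') (exist _ Gm HG') (exist _ s Hs')).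
    + apply (mor_interp_Fh C Sg G fun_decl_wf symT_G symF_Ga symT_G_realized symF_Ga_realized_Sg D Gm HD HG (exist _ s Hs)).
  - intros Gm HG HG' A HA HA'. simpl.
    apply (castTy_interp_ty C symT_G symF_Ga (rvars Gm) A _ _ _ _ (G_ext_tele Gm HG HG')).
    + apply (Isg_spec C symT_G symF_Ga Sg' symbols_Ga_wf (exist _ Gm HG') (exist _ A HA')).
    + apply (proj1 (proj2 G_interp)).
  - intros Gm HG HG' A HA HA' t Ht Ht'. simpl.
    apply (castTm_interp_tm C symF_Ga (rvars Gm) t _ _ _ _ (G_ext_tele Gm HG HG')).
    + apply (Ith_spec C symT_G symF_Ga Sg' symbols_Ga_wf (exist _ Gm HG') (exist _ A HA') (exist _ t Ht')).
    + apply (proj2 (proj2 G_interp)).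
Qed.

Lemma G_ext_f : sends_f_to_a G_ext G_ext_obj.
Proof.
  intros HG' HU' Ht'. simpl.
  apply (castTm_interp_tm C symF_Ga (rvars Gf) (PApp f (OV Gf)) _ _ _ _ (G_ext_tele Gf (jty_ctx Sg Gf Uf HU) HG')).
  - apply (Ith_spec C symT_G symF_Ga Sg' symbols_Ga_wf (exist _ Gf HG') (exist _ Uf HU') (exist _ _ Ht')).
  - simpl. rewrite symF_Ga_f. cbn [projT1 projT2 fst snd].
    pose proof (proj1 G_interp Gf (jty_ctx Sg Gf Uf HU)) as E. unfold mor_ctx, interp_ctx in E.
    apply interp_rctx_id in E.
    rewrite OV_ovars, <- map_rev, <- map_rev. unfold rvars in *. unfold ovars.
    rewrite (map_rev fst Gf). rewrite <- (map_rev fst Gf). rewrite E. simpl. rewrite msub_id. auto.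
Qed.

Lemma symT_G_realized_of_restricts (M : FsMor Sg' C) (eo : EmbObjEq G M) : EmbRest G M eo -> symT_realized C Sg' M symT_G.
Proof.
  intros [R1 [R2 R3]] Dl Sy HS HDl' HA'. pose proof (sig_add_DTy_inv _ _ HS) as HS0.
  rewrite (symT_G_realized Dl Sy HS0 (ty_decl_wf _ _ HS0) (jty_decl_OV Sg _ _ HS0 (ty_decl_wf _ _ HS0))). f_equal. symmetry.
  apply (pack_transport (fun X Y e x => castTy e x) (fun X x => eq_refl) _ _ _ _
     (mor_ctx_transport G M eo R2 Dl (ty_decl_wf _ _ HS0) HDl') (eo Dl (ty_decl_wf _ _ HS0) HDl')).
  apply R2.
Qed.

Lemma symF_Ga_realized_of_restricts (M : FsMor Sg' C) (eo : EmbObjEq G M) : EmbRest G M eo ->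
  sends_f_to_a M eo ->
  symF_realized C Sg' M symF_Ga.
Proof.
  intros [R1 [R2 R3]] Hfc Dl g U HS HDl' HU' Ht'.
  destruct (sig_add_DFun_inv _ _ _ HS) as [HS0|[-> [-> ->]]].
  - rewrite (symF_Ga_realized_Sg Dl g U HS0 (jty_ctx _ _ _ (fun_decl_wf _ _ _ HS0)) (fun_decl_wf _ _ _ HS0) (jtm_decl_OV Sg _ _ _ HS0 (fun_decl_wf _ _ _ HS0))).
    f_equal. symmetry.
    apply (pack_transport (fun X Y e x => castTm e x) (fun X x => eq_refl) _ _ _ _
      (mor_ctx_transport G M eo R2 Dl _ HDl') (eo Dl _ HDl')).
    apply R3.
  - rewrite symF_Ga_f. f_equal. symmetry.
    apply (pack_transport (fun X Y e x => castTm e x) (fun X x => eq_refl) _ _ _ _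
      (mor_ctx_transport G M eo R2 Gf _ HDl') (eo Gf _ HDl')).
    apply Hfc.
Qed.

Lemma G_ext_unique (M : FsMor Sg' C) (eo : EmbObjEq G M) : EmbRest G M eo ->
  sends_f_to_a M eo ->
  G_ext = M.
Proof.
  intros Hrest Hfa. apply (mor_unique_of_symbols C Sg' fun_decl_wf' symT_G symF_Ga).
  - exact (symT_G_realized_of_restricts G_ext G_ext_obj G_ext_restricts).
  - exact (symF_Ga_realized_of_restricts G_ext G_ext_obj G_ext_restricts G_ext_f).
  - exact (symT_G_realized_of_restricts M eo Hrest).
  - exact (symF_Ga_realized_of_restricts M eo Hrest Hfa).
Qed.

End Extension.

Theorem mainTheorem15 (Sg : presig) (C : Cwf) (G : FsMor Sg C)
  (f : fsym) (Gf : ctx) (Uf : pty)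
  (HSg : is_signature Sg)
  (Hf : forall (Gm : ctx) (U : pty), ~ Sg (DFun Gm f U))
  (HU : jty Sg Gf Uf)
  (a : Tm (Fo G (exist _ Gf (jty_ctx Sg Gf Uf HU))))
  (Ha : tyof a = @sg _ _ G (exist _ Gf (jty_ctx Sg Gf Uf HU)) (exist _ Uf HU)) :
  exists! G' : FsMor (sig_add Sg (DFun Gf f Uf)) C,
    exists eo : EmbObjEq G G',
      EmbRest G G' eo /\
      (forall (HG' : jctx (sig_add Sg (DFun Gf f Uf)) Gf)
              (HU' : jty (sig_add Sg (DFun Gf f Uf)) Gf Uf)
              (Ht' : jtm (sig_add Sg (DFun Gf f Uf)) Gf (PApp f (OV Gf)) Uf),
          castTm (eo Gf (jty_ctx Sg Gf Uf HU) HG')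
            (@th _ _ G' (exist _ Gf HG') (exist _ Uf HU') (exist _ (PApp f (OV Gf)) Ht'))
          = a).
Proof.
  exists (G_ext Sg C G f Gf Uf HSg Hf HU a Ha). split.
  - exists (G_ext_obj Sg C G f Gf Uf HSg Hf HU a Ha).
    split; [apply G_ext_restricts | apply G_ext_f].
  - intros M [eo [Hrest Hfa]]. exact (G_ext_unique Sg C G f Gf Uf HSg Hf HU a Ha M eo Hrest Hfa).
Qed.
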